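(* Let $0<R_{\rm id}<R_{\rm d}$, and let $\Omega$, $\Gamma_{\rm d}$, $\Gamma_{\rm id}$, $n$, $(\overline u,\overline q)$, $\omega^*$, $v(\omega)$, $\widehat v(\omega)$, $J'(\omega)$, the iteration $\omega_{k+1}=\omega_k-\rho_kJ'(\omega_k)$, $\mu_k=\omega^*-\omega_k$ and $C_j$ be as in the context. Assume there are integers $N\ge M\ge0$ such that the initial error has a finite Fourier expansion $\mu_0=\sum_{M\le|j|\le N}a_j^{(0)}e^{ij\theta}$ on $\Gamma_{\rm id}$. If the step sizes are chosen as $\rho_k=1/C_{M+k}$ for $k=0,1,\dots,N-M$, or alternatively as $\rho_k=1/C_{N-k}$ for $k=0,1,\dots,N-M$, then $\mu_{N-M+1}=0$, i.e. $\omega_{N-M+1}=\omega^*$.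
   Context: Setting: $0<R_{\rm id}<R_{\rm d}$; $\Omega=\{(x,y): R_{\rm id}^2<x^2+y^2<R_{\rm d}^2\}$ is an annulus with outer boundary $\Gamma_{\rm d}=\{x^2+y^2=R_{\rm d}^2\}$ and inner boundary $\Gamma_{\rm id}=\{x^2+y^2=R_{\rm id}^2\}$; $(r,\theta)$ are polar coordinates; $n$ is the unit outward normal to $\partial\Omega$ (so $\partial/\partial n=\partial/\partial r$ on $\Gamma_{\rm d}$ and $\partial/\partial n=-\partial/\partial r$ on $\Gamma_{\rm id}$). Given Cauchy data $(\overline u,\overline q)$ on $\Gamma_{\rm d}$. For a boundary value $\omega$ on $\Gamma_{\rm id}$, $v(\omega)$ denotes the solution of the primary problem $-\Delta v=0$ in $\Omega$, $\partial v/\partial n=\overline q$ on $\Gamma_{\rm d}$, $v=\omega$ on $\Gamma_{\rm id}$; $\widehat v(\omega)$ denotes the solution of the adjoint problem $-\Delta \widehat v=0$ in $\Omega$, $\partial\widehat v/\partial n=2(v(\omega)-\overline u)$ on $\Gamma_{\rm d}$, $\widehat v=0$ on $\Gamma_{\rm id}$; and $J'(\omega):=-\partial\widehat v(\omega)/\partial n|_{\Gamma_{\rm id}}$. The exact boundary value $\omega^*$ is assumed to exist, i.e. $v(\omega^* )|_{\Gamma_{\rm d}}=\overline u$. Starting from $\omega_0$ and step sizes $\rho_k>0$, the iteration is $\omega_{k+1}=\omega_k-\rho_kJ'(\omega_k)$ (with exact solution of the boundary value problems), and $\mu_k:=\omega^*-\omega_k$. For integers $j$, $$C_j:=\frac{8R_{\rm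 d}^{2|j|+1}R_{\rm id}^{2|j|-1}}{(R_{\rm id}^{2|j|}+R_{\rm d}^{2|j|})^2}.$$ Functions on $\Gamma_{\rm id}$ may be complex-valued; Fourier expansions are in $e^{ij\theta}$. *)

From Stdlib Require Import Reals Lra ZArith.
Open Scope R_scope.

Definition Cx : Type := (R * R)%type.
Definition Cre (z : Cx) : R := fst z.
Definition Cim (z : Cx) : R := snd z.
Definition Cadd (z w : Cx) : Cx := (fst z + fst w, snd z + snd w).
Definition Csub (z w : Cx) : Cx := (fst z - fst w, snd z - snd w).
Definition Cmul (z w : Cx) : Cx :=
  (fst z * fst w - snd z * snd w, fst z * snd w + snd z * fst w).
Definition Cscal (a : R) (z : Cx) : Cx := (a * fst z, a * snd z).
Definition Cexpi (j : Z) (th : R) : Cx := (cos (IZR j * th), sin (IZR j * th)).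
Definition C0 : Cx := (0, 0).

Definition in_Omega (Rid Rd x y : R) : Prop :=
  Rid ^ 2 < x ^ 2 + y ^ 2 < Rd ^ 2.
Definition in_closure (Rid Rd x y : R) : Prop :=
  Rid ^ 2 <= x ^ 2 + y ^ 2 <= Rd ^ 2.

Definition cont2_in (S : R -> R -> Prop) (f : R -> R -> R) (x y : R) : Prop :=
  forall eps, 0 < eps -> exists del, 0 < del /\
    forall x' y', S x' y' -> (x' - x) ^ 2 + (y' - y) ^ 2 < del ^ 2 ->
      Rabs (f x' y' - f x y) < eps.

Definition harmonic_classical (Rid Rd : R) (u : R -> R -> R) : Prop :=
  (exists ux uy uxx uxy uyx uyy : R -> R -> R,
    forall x y, in_Omega Rid Rd x y ->
      derivable_pt_lim (fun t => u t y) x (ux x y) /\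
      derivable_pt_lim (fun t => u x t) y (uy x y) /\
      derivable_pt_lim (fun t => ux t y) x (uxx x y) /\
      derivable_pt_lim (fun t => ux x t) y (uxy x y) /\
      derivable_pt_lim (fun t => uy t y) x (uyx x y) /\
      derivable_pt_lim (fun t => uy x t) y (uyy x y) /\
      cont2_in (fun _ _ => True) uxx x y /\ cont2_in (fun _ _ => True) uxy x y /\
      cont2_in (fun _ _ => True) uyx x y /\ cont2_in (fun _ _ => True) uyy x y /\
      - (uxx x y + uyy x y) = 0) /\
  (forall x y, in_closure Rid Rd x y -> cont2_in (in_closure Rid Rd) u x y).

Definition ray (u : R -> R -> R) (th : R) : R -> R :=
  fun t => u (t * cos th) (t * sin th).

(* outward normal derivative on Gamma_d (= d/dr, one-sided from inside) *)
Definition dn_outer (Rd : R) (u : R -> R -> R) (th l : R) : Prop :=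
  limit1_in (fun h => (ray u th (Rd + h) - ray u th Rd) / h)
            (fun h => h < 0) l 0.

(* outward normal derivative on Gamma_id (= - d/dr, one-sided from inside) *)
Definition dn_inner (Rid : R) (u : R -> R -> R) (th l : R) : Prop :=
  limit1_in (fun h => - ((ray u th (Rid + h) - ray u th Rid) / h))
            (fun h => 0 < h) l 0.

Definition re_f (u : R -> R -> Cx) : R -> R -> R := fun x y => fst (u x y).
Definition im_f (u : R -> R -> Cx) : R -> R -> R := fun x y => snd (u x y).

Definition harmonicC (Rid Rd : R) (u : R -> R -> Cx) : Prop :=
  harmonic_classical Rid Rd (re_f u) /\ harmonic_classical Rid Rd (im_f u).
Definition dn_outerC (Rd : R) (u : R -> R -> Cx) (th : R) (l : Cx) : Prop :=
  dn_outer Rd (re_f u) th (fst l) /\ dn_outer Rd (im_f u) th (snd l).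
Definition dn_innerC (Rid : R) (u : R -> R -> Cx) (th : R) (l : Cx) : Prop :=
  dn_inner Rid (re_f u) th (fst l) /\ dn_inner Rid (im_f u) th (snd l).

Definition trace (r : R) (u : R -> R -> Cx) (th : R) : Cx :=
  u (r * cos th) (r * sin th).

Definition primary_sol (Rid Rd : R) (qbar om : R -> Cx) (v : R -> R -> Cx) : Prop :=
  harmonicC Rid Rd v /\
  (forall th, dn_outerC Rd v th (qbar th)) /\
  (forall th, trace Rid v th = om th).

Definition adjoint_sol (Rid Rd : R) (ubar : R -> Cx) (v vh : R -> R -> Cx) : Prop :=
  harmonicC Rid Rd vh /\
  (forall th, dn_outerC Rd vh th (Cscal 2 (Csub (trace Rd v th) (ubar th)))) /\
  (forall th, trace Rid vh th = C0).

Definition Cj (Rid Rd : R) (j : Z) : R :=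
  8 * powerRZ Rd (2 * Z.abs j + 1) * powerRZ Rid (2 * Z.abs j - 1)
    / (powerRZ Rid (2 * Z.abs j) + powerRZ Rd (2 * Z.abs j)) ^ 2.

(* finite Fourier sum  sum_{M <= |j| <= N} a_j e^{i j th}  (j ranges over Z) *)
Fixpoint csum (n : nat) (f : nat -> Cx) : Cx :=
  match n with
  | O => f O
  | S n' => Cadd (csum n' f) (f n)
  end.
Definition fourier_sum (M N : nat) (a : Z -> Cx) (th : R) : Cx :=
  csum (2 * N) (fun k =>
    let j := (Z.of_nat k - Z.of_nat N)%Z in
    if Z.leb (Z.of_nat M) (Z.abs j) then Cmul (a j) (Cexpi j th) else C0).

(* Everything is diagonal in the Fourier basis e^{ijθ}:

   1. Uniqueness.  A harmonic function on the closed annulus that vanishes on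
      Γ_id and has zero outward normal derivative on Γ_d vanishes.  This is a
      weak maximum principle: for δ > 0, w + δ/r² attains its maximum on the
      compact closed annulus; an interior maximum contradicts
      Δ(w + δ/r²) = 4δ/r⁴ > 0, a maximum on Γ_d contradicts the negative
      normal derivative of δ/r², so the maximum is δ/R_id² on Γ_id; let δ → 0.
   2. Explicit modes.  From the harmonic functions z^n, z^{-n}, log|z| we build
      W_j (zero Neumann data on Γ_d, Dirichlet datum e^{ijθ} on Γ_id, trace
      γ_j e^{ijθ} on Γ_d) and H_j (Neumann datum -2γ_j e^{ijθ}, zero on Γ_id),
      whose inner normal derivative is C_j e^{ijθ}.
   3. One step.  If μ_k = Σ c_j e^{ijθ}, uniqueness gives v_k = v* - Σ c_j W_j
      and v̂_k = Σ c_j H_j, hence J'(ω_k) = -Σ c_j C_j e^{ijθ} and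
      μ_{k+1} = Σ (1 - ρ_k C_j) c_j e^{ijθ}.
   4. After N-M+1 steps the coefficient of mode j is Π_i (1 - ρ_i C_j) a_j;
      since C_j depends on |j| only, each admissible step-size schedule kills
      every mode M ≤ |j| ≤ N exactly once. *)

From Stdlib Require Import Reals Lra Lia Psatz ZArith Classical ClassicalEpsilon.
Open Scope R_scope.

(** * Continuity of functions of two real variables *)

Lemma sq_lt_abs : forall a e, 0 < e -> a * a < e * e -> Rabs a < e.
Proof. intros a e He H. unfold Rabs; destruct (Rcase_abs a); nra. Qed.

Lemma continuity_pt_eps : forall g t0, continuity_pt g t0 ->
  forall eps, 0 < eps -> exists al, 0 < al /\
    forall t, Rabs (t - t0) < al -> Rabs (g t - g t0) < eps.
Proof.
  intros g t0 Hc eps He. destruct (Hc eps He) as [al [Hal H]].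
  exists al; split; [lra|]. intros t Ht.
  destruct (Req_dec t t0) as [->|Hn].
  - rewrite Rminus_diag, Rabs_R0; lra.
  - apply (H t). split; [split; [exact I| auto]|]. simpl. unfold R_dist. exact Ht.
Qed.

Section Cont2.
Variable S : R -> R -> Prop.

Lemma cont2_const : forall c x y, cont2_in S (fun _ _ => c) x y.
Proof. intros c x y eps He. exists 1; split; [lra|]. intros. rewrite Rminus_diag, Rabs_R0; lra. Qed.

Lemma cont2_fst : forall x y, cont2_in S (fun a _ => a) x y.
Proof. intros x y eps He. exists eps; split; [lra|]. intros x' y' _ H.
  apply sq_lt_abs; [lra|]. pose proof (pow2_ge_0 (y' - y)). simpl in *. lra. Qed.

Lemma cont2_snd : forall x y, cont2_in S (fun _ b => b) x y.
Proof. intros x y eps He. exists eps; split; [lra|]. intros x' y' _ H.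
  apply sq_lt_abs; [lra|]. pose proof (pow2_ge_0 (x' - x)). simpl in *. lra. Qed.

Lemma cont2_plus : forall f g x y, cont2_in S f x y -> cont2_in S g x y ->
  cont2_in S (fun a b => f a b + g a b) x y.
Proof.
  intros f g x y Hf Hg eps He.
  destruct (Hf (eps/2)) as [d1 [Hd1 H1]]; [lra|].
  destruct (Hg (eps/2)) as [d2 [Hd2 H2]]; [lra|].
  exists (Rmin d1 d2); split; [apply Rmin_pos; lra|].
  intros x' y' Hs Hd.
  assert (Hm1 : Rmin d1 d2 <= d1) by apply Rmin_l.
  assert (Hm2 : Rmin d1 d2 <= d2) by apply Rmin_r.
  assert (Hp : 0 < Rmin d1 d2) by (apply Rmin_pos; lra).
  assert (Hq : Rmin d1 d2 ^ 2 <= d1 ^ 2 /\ Rmin d1 d2 ^ 2 <= d2 ^ 2)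
    by (split; apply pow_incr; lra).
  assert (A1 : Rabs (f x' y' - f x y) < eps/2) by (apply H1; auto; lra).
  assert (A2 : Rabs (g x' y' - g x y) < eps/2) by (apply H2; auto; lra).
  replace (f x' y' + g x' y' - (f x y + g x y))
    with ((f x' y' - f x y) + (g x' y' - g x y)) by ring.
  eapply Rle_lt_trans; [apply Rabs_triang|]. lra.
Qed.

Lemma cont2_comp : forall (g : R -> R) f x y, cont2_in S f x y ->
  continuity_pt g (f x y) -> cont2_in S (fun a b => g (f a b)) x y.
Proof.
  intros g f x y Hf Hg eps He.
  destruct (continuity_pt_eps g _ Hg eps He) as [al [Hal H]].
  destruct (Hf al Hal) as [d [Hd H1]].
  exists d; split; auto.
Qed.

Lemma cont2_scal : forall c f x y, cont2_in S f x y -> cont2_in S (fun a b => c * f a b) x y.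
Proof. intros. apply (cont2_comp (fun t => c * t)); auto. reg. Qed.

Lemma cont2_opp : forall f x y, cont2_in S f x y -> cont2_in S (fun a b => - f a b) x y.
Proof. intros. apply (cont2_comp (fun t => - t)); auto. reg. Qed.

Lemma cont2_minus : forall f g x y, cont2_in S f x y -> cont2_in S g x y ->
  cont2_in S (fun a b => f a b - g a b) x y.
Proof. intros. unfold Rminus. apply cont2_plus; auto. apply cont2_opp; auto. Qed.

Lemma cont2_ext : forall f g x y, (forall a b, f a b = g a b) ->
  cont2_in S f x y -> cont2_in S g x y.
Proof. intros f g x y E H eps He. destruct (H eps He) as [d [Hd H2]]. exists d; split; auto.
  intros. rewrite <- !E. auto. Qed.

(* Products via the polarization identity f g = ((f+g)² - (f-g)²)/4. *)
Lemma cont2_mult : forall f g x y, cont2_in S f x y -> cont2_in S g x y ->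
  cont2_in S (fun a b => f a b * g a b) x y.
Proof.
  intros f g x y Hf Hg.
assert (Hsq : forall h, cont2_in S h x y -> cont2_in S (fun a b => h a b * h a b) x y)
    by (intros h Hh; apply (cont2_comp (fun t => t * t)); auto;
        apply derivable_continuous_pt; reg).
  apply (cont2_ext (fun a b => /4 * (f a b + g a b) * (f a b + g a b)
                               + (- /4) * ((f a b - g a b) * (f a b - g a b))));
    [intros; field|].
  apply cont2_plus; [|apply cont2_scal, Hsq, cont2_minus; auto].
  apply (cont2_ext (fun a b => /4 * ((f a b + g a b) * (f a b + g a b)))); [intros; ring|].
  apply cont2_scal, Hsq, cont2_plus; auto.
Qed.

Lemma cont2_inv : forall f x y, cont2_in S f x y -> f x y <> 0 ->
  cont2_in S (fun a b => / f a b) x y.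
Proof. intros. apply (cont2_comp Rinv); auto. apply continuity_pt_inv; auto.
  apply derivable_continuous_pt; reg. Qed.

End Cont2.

Lemma cont2_weaken : forall (S : R -> R -> Prop) f x y,
  cont2_in (fun _ _ => True) f x y -> cont2_in S f x y.
Proof. intros S f x y H eps He. destruct (H eps He) as [d [Hd H2]]. exists d; split; auto. Qed.

Definition sqn (x y : R) : R := x ^ 2 + y ^ 2.

Lemma cont2_sqn : forall S x y, cont2_in S sqn x y.
Proof.
  intros. unfold sqn. apply cont2_plus.
  - apply (cont2_ext _ (fun a b => a * a)); [intros; ring|]. apply cont2_mult; apply cont2_fst.
  - apply (cont2_ext _ (fun a b => b * b)); [intros; ring|]. apply cont2_mult; apply cont2_snd.
Qed.

Lemma sqn_ray : forall t th, sqn (t * cos th) (t * sin th) = t ^ 2.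
Proof. intros. unfold sqn. pose proof (sin2_cos2 th). unfold Rsqr in H. nra. Qed.

(** * Extreme value theorem on the closed annulus *)

Lemma Rabs_le_inv : forall a b, Rabs a <= b -> -b <= a <= b.
Proof. intros a b H. unfold Rabs in H; destruct (Rcase_abs a); lra. Qed.

Lemma valadh_eps : forall un l, ValAdh un l -> forall eps, 0 < eps -> forall N,
  exists p, (N <= p)%nat /\ Rabs (un p - l) < eps.
Proof.
  intros un l H eps He N. destruct (H (disc l (mkposreal eps He)) N) as [p [Hp Hv]].
  - exists (mkposreal eps He). intros z Hz; exact Hz.
  - exists p; split; auto.
Qed.

Lemma subseq_extract : forall (P : nat -> nat -> Prop),
  (forall N k, exists p, (N <= p)%nat /\ P k p) ->
  exists phi : nat -> nat, (forall n, (n <= phi n)%nat) /\ (forall n, P n (phi n)).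
Proof.
  intros P H.
  assert (F : forall N k, {p | (N <= p)%nat /\ P k p}).
  { intros N k. apply constructive_indefinite_description. apply H. }
  pose (phi := fix phi n := match n with
      | O => proj1_sig (F O O)
      | S m => proj1_sig (F (S (phi m)) (S m)) end).
  exists phi. split.
  - induction n; simpl.
    + lia.
    + destruct (proj2_sig (F (S (phi n)) (S n))) as [A _]. lia.
  - intro n; destruct n; simpl.
    + exact (proj2 (proj2_sig (F O O))).
    + exact (proj2 (proj2_sig (F (S (phi n)) (S n)))).
Qed.

Lemma inv_small : forall eta, 0 < eta -> exists K, forall k, (K <= k)%nat -> / INR (S k) < eta.
Proof.
  intros eta He. destruct (archimed_cor1 eta He) as [K [HK HK0]].
  exists K. intros k Hk. eapply Rle_lt_trans; [|exact HK].
  apply Rinv_le_contravar. apply lt_0_INR; lia. apply le_INR; lia.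
Qed.

Definition cluster_pt (xs ys : nat -> R) (px py : R) : Prop :=
  forall eta, 0 < eta -> forall N, exists n, (N <= n)%nat /\
    Rabs (xs n - px) < eta /\ Rabs (ys n - py) < eta.

(* Bolzano-Weierstrass in the plane, applied coordinatewise. *)
Lemma bolzano_weierstrass_2d : forall (xs ys : nat -> R) B,
  (forall n, Rabs (xs n) <= B /\ Rabs (ys n) <= B) ->
  exists px py, cluster_pt xs ys px py.
Proof.
  intros xs ys B HB.
  assert (Hc : forall n, (fun c => -B <= c <= B) (xs n)).
  { intro n. destruct (HB n) as [H1 _]. apply Rabs_le_inv in H1. auto. }
  destruct (Bolzano_Weierstrass xs _ (compact_P3 (-B) B) Hc) as [l1 Hl1].
  destruct (subseq_extract (fun k p => Rabs (xs p - l1) < / INR (S k))) as [phi [Hphi1 Hphi2]].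
  { intros N k. apply valadh_eps; auto. apply Rinv_0_lt_compat, lt_0_INR; lia. }
  assert (Hc2 : forall n, (fun c => -B <= c <= B) (ys (phi n))).
  { intro n. destruct (HB (phi n)) as [_ H1]. apply Rabs_le_inv in H1. auto. }
  destruct (Bolzano_Weierstrass (fun n => ys (phi n)) _ (compact_P3 (-B) B) Hc2) as [l2 Hl2].
  exists l1, l2. intros eta He N.
  destruct (inv_small eta He) as [K HK].
  destruct (valadh_eps _ _ Hl2 eta He (Nat.max N K)) as [m [Hm1 Hm2]].
  exists (phi m). split; [specialize (Hphi1 m); lia|]. split; auto.
  specialize (Hphi2 m). simpl in Hphi2. eapply Rlt_trans; [exact Hphi2|]. apply HK. lia.
Qed.

Lemma choice_seq2 : forall (P : nat -> R -> R -> Prop),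
  (forall n, exists x y, P n x y) -> exists xs ys : nat -> R, forall n, P n (xs n) (ys n).
Proof.
  intros P H.
  assert (F : forall n, {q : R * R | P n (fst q) (snd q)}).
  { intro n. apply constructive_indefinite_description. destruct (H n) as [x [y Hxy]].
    exists (x, y); auto. }
  exists (fun n => fst (proj1_sig (F n))), (fun n => snd (proj1_sig (F n))).
  intro n. exact (proj2_sig (F n)).
Qed.

Lemma close_sq : forall a b eta, Rabs a < eta -> Rabs b < eta -> a ^ 2 + b ^ 2 < 2 * eta ^ 2.
Proof.
  intros a b eta Ha Hb.
  assert (a^2 = Rabs a ^ 2) by (unfold Rabs; destruct (Rcase_abs a); ring).
  assert (b^2 = Rabs b ^ 2) by (unfold Rabs; destruct (Rcase_abs b); ring).
  pose proof (Rabs_pos a); pose proof (Rabs_pos b). nra.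
Qed.

Lemma cluster_cont : forall (S : R -> R -> Prop) f px py (xs ys : nat -> R),
  cont2_in S f px py -> (forall n, S (xs n) (ys n)) -> cluster_pt xs ys px py ->
  forall eps, 0 < eps -> forall N, exists n, (N <= n)%nat /\
    Rabs (f (xs n) (ys n) - f px py) < eps.
Proof.
  intros S f px py xs ys Hf HS Hcl eps He N.
  destruct (Hf eps He) as [d [Hd H]].
  destruct (Hcl (d/2) ltac:(lra) N) as [n [Hn [H1 H2]]].
  exists n; split; auto. apply H; auto.
  pose proof (close_sq _ _ _ H1 H2). nra.
Qed.

Lemma annulus_cluster : forall Rid Rd (xs ys : nat -> R), 0 < Rd ->
  (forall n, in_closure Rid Rd (xs n) (ys n)) ->
  exists px py, in_closure Rid Rd px py /\ cluster_pt xs ys px py.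
Proof.
  intros Rid Rd xs ys HRd Hin.
  destruct (bolzano_weierstrass_2d xs ys Rd) as [px [py Hcl]].
  { intro n. destruct (Hin n) as [_ H2]. split; apply Rabs_le; split; nra. }
  exists px, py. split; auto.
  pose proof (cluster_cont (fun _ _ => True) sqn px py xs ys (cont2_sqn _ px py)
                (fun _ => I) Hcl) as Hc.
  unfold in_closure. split; apply Rnot_lt_le; intro Hlt.
  - destruct (Hc (Rid^2 - sqn px py)) with (N := O) as [n [_ Hn]]; [unfold sqn in *; lra|].
    destruct (Hin n). unfold sqn in *. apply Rabs_def2 in Hn. lra.
  - destruct (Hc (sqn px py - Rd^2)) with (N := O) as [n [_ Hn]]; [unfold sqn in *; lra|].
    destruct (Hin n). unfold sqn in *. apply Rabs_def2 in Hn. lra.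
Qed.

Lemma annulus_bounded_above : forall Rid Rd f, 0 < Rid < Rd ->
  (forall x y, in_closure Rid Rd x y -> cont2_in (in_closure Rid Rd) f x y) ->
  exists B, forall x y, in_closure Rid Rd x y -> f x y <= B.
Proof.
  intros Rid Rd f HR Hf. apply NNPP. intro Hno.
  assert (Hs : forall n : nat, exists x y, in_closure Rid Rd x y /\ f x y > INR n).
  { intro n. apply NNPP. intro Hn. apply Hno. exists (INR n). intros x y Hxy.
    apply Rnot_lt_le. intro Hl. apply Hn. exists x, y. split; auto. }
  destruct (choice_seq2 _ Hs) as [xs [ys Hxy]].
  destruct (annulus_cluster Rid Rd xs ys) as [px [py [Hp Hcl]]]; [lra|intro n; apply Hxy|].
  destruct (INR_unbounded (f px py + 1)) as [N HN].
  destruct (cluster_cont _ f px py xs ys (Hf _ _ Hp) (fun n => proj1 (Hxy n)) Hcl 1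
              ltac:(lra) N) as [n [Hn H1]].
  apply Rabs_def2 in H1. destruct (Hxy n) as [_ H2].
  assert (INR N <= INR n) by (apply le_INR; auto). lra.
Qed.

Lemma annulus_max : forall Rid Rd f, 0 < Rid < Rd ->
  (forall x y, in_closure Rid Rd x y -> cont2_in (in_closure Rid Rd) f x y) ->
  exists px py, in_closure Rid Rd px py /\
    forall x y, in_closure Rid Rd x y -> f x y <= f px py.
Proof.
  intros Rid Rd f HR Hf.
  destruct (annulus_bounded_above Rid Rd f HR Hf) as [B HB].
  set (E := fun r => exists x y, in_closure Rid Rd x y /\ r = f x y).
  destruct (completeness E) as [s [Hs1 Hs2]].
  { exists B. intros r [x [y [Hxy ->]]]. auto. }
  { exists (f Rd 0). exists Rd, 0. split; auto. unfold in_closure; nra. }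
  assert (Hs : forall n : nat, exists x y, in_closure Rid Rd x y /\ f x y > s - / INR (S n)).
  { intro n. apply NNPP. intro Hn.
    assert (Hup : is_upper_bound E (s - / INR (S n))).
    { intros r [x [y [Hxy ->]]]. apply Rnot_lt_le. intro Hl. apply Hn. exists x, y; split; auto. }
    specialize (Hs2 _ Hup).
    assert (0 < / INR (S n)) by (apply Rinv_0_lt_compat, lt_0_INR; lia). lra. }
  destruct (choice_seq2 _ Hs) as [xs [ys Hxy]].
  destruct (annulus_cluster Rid Rd xs ys) as [px [py [Hp Hcl]]]; [lra|intro n; apply Hxy|].
  exists px, py. split; auto.
  assert (Hfp : f px py <= s) by (apply Hs1; exists px, py; auto).
  assert (Heq : f px py = s).
  { apply Rle_antisym; auto. apply Rnot_lt_le. intro Hl.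
    set (e := (s - f px py) / 2).
    destruct (inv_small e ltac:(unfold e; lra)) as [K HK].
    destruct (cluster_cont _ f px py xs ys (Hf _ _ Hp) (fun n => proj1 (Hxy n)) Hcl e
                ltac:(unfold e; lra) K) as [n [Hn H1]].
    apply Rabs_def2 in H1. destruct (Hxy n) as [_ H2]. specialize (HK n Hn). unfold e in *. lra. }
  intros x y Hxy'. rewrite Heq. apply Hs1. exists x, y; auto.
Qed.

(** * Derivatives in one variable *)

(* Forms of the Stdlib derivative rules with the functions written as
   lambda terms, so that they apply to goals without unfolding [plus_fct] etc. *)
Lemma dpl_ext : forall f g x l l', (forall t, f t = g t) -> l = l' ->
  derivable_pt_lim f x l -> derivable_pt_lim g x l'.
Proof. intros f g x l l' E -> H eps He. destruct (H eps He) as [d Hd]. exists d.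
  intros h Hh Hh'. rewrite <- !E. auto. Qed.

Lemma dpl_val : forall f x l l', derivable_pt_lim f x l -> l = l' -> derivable_pt_lim f x l'.
Proof. intros f x l l' H <-; auto. Qed.

Lemma dpl_plus : forall f g x l1 l2, derivable_pt_lim f x l1 -> derivable_pt_lim g x l2 ->
  derivable_pt_lim (fun t => f t + g t) x (l1 + l2).
Proof. intros. apply (derivable_pt_lim_plus f g); auto. Qed.
Lemma dpl_minus : forall f g x l1 l2, derivable_pt_lim f x l1 -> derivable_pt_lim g x l2 ->
  derivable_pt_lim (fun t => f t - g t) x (l1 - l2).
Proof. intros. apply (derivable_pt_lim_minus f g); auto. Qed.
Lemma dpl_mult : forall f g x l1 l2, derivable_pt_lim f x l1 -> derivable_pt_lim g x l2 ->
  derivable_pt_lim (fun t => f t * g t) x (l1 * g x + f x * l2).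
Proof. intros. apply (derivable_pt_lim_mult f g); auto. Qed.
Lemma dpl_opp : forall f x l, derivable_pt_lim f x l -> derivable_pt_lim (fun t => - f t) x (- l).
Proof. intros. apply (derivable_pt_lim_opp f); auto. Qed.
Lemma dpl_scal : forall c f x l, derivable_pt_lim f x l ->
  derivable_pt_lim (fun t => c * f t) x (c * l).
Proof. intros. eapply dpl_val; [apply (dpl_mult (fun _ => c) f x 0 l);
  [apply derivable_pt_lim_const|eauto]|]. ring. Qed.
Lemma dpl_comp : forall f g x l1 l2, derivable_pt_lim f x l1 -> derivable_pt_lim g (f x) l2 ->
  derivable_pt_lim (fun t => g (f t)) x (l2 * l1).
Proof. intros. apply (derivable_pt_lim_comp f g); auto. Qed.
Lemma dpl_inv : forall f x l, derivable_pt_lim f x l -> f x <> 0 ->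
  derivable_pt_lim (fun t => / f t) x (- l / (f x ^ 2)).
Proof. intros f x l H Hn. eapply dpl_ext; [| |apply (derivable_pt_lim_div (fun _ => 1) f x 0 l);
  [apply derivable_pt_lim_const|auto|auto]].
  intros; unfold div_fct, Rdiv; ring. unfold Rsqr. field. auto. Qed.

Lemma div_nonpos : forall a h, 0 < h -> a <= 0 -> a / h <= 0.
Proof. intros. assert (a / h * h = a) by (field; lra). nra. Qed.
Lemma div_nonneg : forall a h, h < 0 -> a <= 0 -> 0 <= a / h.
Proof. intros. assert (a / h * h = a) by (field; lra). nra. Qed.
Lemma div_pos_inv : forall a h k, 0 < h -> k < a / h -> 0 < k -> 0 < a.
Proof. intros. assert (a / h * h = a) by (field; lra). nra. Qed.

Lemma deriv_zero_at_max : forall f a b c l, a < c < b ->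
  derivable_pt_lim f c l -> (forall t, a < t < b -> f t <= f c) -> l = 0.
Proof.
  intros f a b c l Hc Dc Hmax.
  apply Rle_antisym; apply Rnot_lt_le; intro Hl.
  - destruct (Dc l Hl) as [d Hdd].
    set (h := Rmin d (b - c) / 2).
    assert (Hm1 : Rmin d (b - c) <= d) by apply Rmin_l.
    assert (Hm2 : Rmin d (b - c) <= b - c) by apply Rmin_r.
    assert (Hp : 0 < Rmin d (b - c)) by (apply Rmin_pos; [apply cond_pos|lra]).
    assert (Hh : 0 < h) by (unfold h; lra).
    specialize (Hdd h ltac:(lra) ltac:(rewrite Rabs_pos_eq; unfold h; lra)).
    assert (Hle : f (c + h) - f c <= 0)
      by (assert (f (c + h) <= f c) by (apply Hmax; unfold h; lra); lra).
    pose proof (div_nonpos _ _ Hh Hle). apply Rabs_def2 in Hdd. lra.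
  - destruct (Dc (- l)) as [d Hdd]; [lra|].
    set (h := - (Rmin d (c - a) / 2)).
    assert (Hm1 : Rmin d (c - a) <= d) by apply Rmin_l.
    assert (Hm2 : Rmin d (c - a) <= c - a) by apply Rmin_r.
    assert (Hp : 0 < Rmin d (c - a)) by (apply Rmin_pos; [apply cond_pos|lra]).
    assert (Hh : h < 0) by (unfold h; lra).
    specialize (Hdd h ltac:(lra) ltac:(rewrite Rabs_left; unfold h; lra)).
    assert (Hle : f (c + h) - f c <= 0)
      by (assert (f (c + h) <= f c) by (apply Hmax; unfold h; lra); lra).
    pose proof (div_nonneg _ _ Hh Hle). apply Rabs_def2 in Hdd. lra.
Qed.

(* Second-derivative test: at an interior maximum f'' <= 0 (via the mean
   value theorem, since f'(c) = 0). *)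
Lemma second_deriv_test : forall f f1 a b c l, a < c < b ->
  (forall t, a < t < b -> derivable_pt_lim f t (f1 t)) -> derivable_pt_lim f1 c l ->
  (forall t, a < t < b -> f t <= f c) -> l <= 0.
Proof.
  intros f f1 a b c l Hc Hd Hd1 Hmax.
  pose proof (deriv_zero_at_max f a b c (f1 c) Hc (Hd c Hc) Hmax) as Hf1.
  apply Rnot_lt_le. intro Hl.
  destruct (Hd1 (l/2)) as [d Hdd]; [lra|].
  set (h := Rmin d (b - c) / 2).
  assert (Hm1 : Rmin d (b - c) <= d) by apply Rmin_l.
  assert (Hm2 : Rmin d (b - c) <= b - c) by apply Rmin_r.
  assert (Hp : 0 < Rmin d (b - c)) by (apply Rmin_pos; [apply cond_pos|lra]).
  assert (Hh : 0 < h) by (unfold h; lra).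
  destruct (MVT_cor2 f f1 c (c + h)) as [xi [Hxi1 Hxi2]]; [lra| |].
  { intros t Ht. apply Hd. unfold h in *; lra. }
  specialize (Hdd (xi - c) ltac:(lra) ltac:(rewrite Rabs_pos_eq; unfold h in *; lra)).
  replace (c + (xi - c)) with xi in Hdd by ring. rewrite Hf1 in Hdd.
  apply Rabs_def2 in Hdd. destruct Hdd as [_ Hdd].
  assert (Hpos : 0 < f1 xi - 0) by (apply (div_pos_inv _ (xi - c) (l/2)); lra).
  assert (f (c + h) <= f c) by (apply Hmax; unfold h; lra).
  assert (0 < f1 xi * (c + h - c)) by (apply Rmult_lt_0_compat; lra).
  lra.
Qed.

Lemma barrier_d1 : forall dl c t, 0 < t ^ 2 + c ->
  derivable_pt_lim (fun s => dl * / (s ^ 2 + c)) t (dl * (- (2 * t) / (t ^ 2 + c) ^ 2)).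
Proof.
  intros dl c t Hp. apply dpl_scal.
  eapply dpl_val; [apply dpl_inv; [apply dpl_plus;
    [apply derivable_pt_lim_pow|apply derivable_pt_lim_const]|lra]|].
  simpl. field. lra.
Qed.

Lemma barrier_d2 : forall dl c t, 0 < t ^ 2 + c ->
  derivable_pt_lim (fun s => dl * (- (2 * s) / (s ^ 2 + c) ^ 2)) t
    (dl * (6 * t^2 - 2 * c) / (t ^ 2 + c) ^ 3).
Proof.
  intros dl c t Hp.
  eapply dpl_val; [apply dpl_scal; unfold Rdiv; apply dpl_mult|].
  - apply dpl_opp, dpl_scal, derivable_pt_lim_id.
  - apply dpl_inv; [|apply pow_nonzero; lra].
    apply (dpl_comp (fun s => s ^ 2 + c) (fun u => u ^ 2)); [|apply derivable_pt_lim_pow].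
    apply dpl_plus; [apply derivable_pt_lim_pow|apply derivable_pt_lim_const].
  - simpl. field. lra.
Qed.

(** * The weak maximum principle and uniqueness *)

Lemma polar : forall x y r, 0 < r -> x ^ 2 + y ^ 2 = r ^ 2 ->
  exists th, x = r * cos th /\ y = r * sin th.
Proof.
  intros x y r Hr Hxy.
  set (c := x / r).
  assert (Hc : -1 <= c <= 1).
  { unfold c. assert (x^2 <= r^2) by nra. split;
      (apply (Rmult_le_reg_r r); [lra|]; unfold Rdiv;
       rewrite Rmult_assoc, Rinv_l by lra; nra). }
  assert (Hs : sqrt (1 - c²) = Rabs y / r).
  { replace (1 - c²) with (Rsqr (y / r)).
    - rewrite sqrt_Rsqr_abs. unfold Rdiv.
      rewrite Rabs_mult, Rabs_inv, (Rabs_pos_eq r) by lra. reflexivity.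
    - unfold c, Rsqr. replace (y/r*(y/r)) with ((y*y)/(r*r)) by (field; lra).
      replace (y*y) with (r*r - x*x) by nra. field. lra. }
  destruct (Rle_dec 0 y) as [Hy|Hy].
  - exists (acos c). rewrite cos_acos, sin_acos by auto. rewrite Hs, Rabs_pos_eq by auto.
    unfold c; split; field; lra.
  - exists (- acos c). rewrite cos_neg, sin_neg, cos_acos, sin_acos by auto.
    rewrite Hs, Rabs_left by lra. unfold c; split; field; lra.
Qed.

Lemma open_line_x : forall Rid Rd x y, in_Omega Rid Rd x y ->
  exists eta, 0 < eta /\ forall t, Rabs (t - x) < eta -> in_Omega Rid Rd t y.
Proof.
  intros Rid Rd x y [H1 H2].
  destruct (cont2_sqn (fun _ _ => True) x y (Rmin (sqn x y - Rid^2) (Rd^2 - sqn x y)))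
    as [d [Hd H]]; [apply Rmin_pos; unfold sqn; lra|].
  exists d; split; auto. intros t Ht.
  assert (Hq : (t - x) ^ 2 + (y - y) ^ 2 < d ^ 2).
  { replace (y - y) with 0 by ring.
    assert ((t-x)^2 = Rabs (t-x) ^2) by (unfold Rabs; destruct (Rcase_abs (t-x)); ring).
    pose proof (Rabs_pos (t-x)). nra. }
  specialize (H t y I Hq). apply Rabs_def2 in H.
  assert (Rmin (sqn x y - Rid^2) (Rd^2 - sqn x y) <= sqn x y - Rid^2) by apply Rmin_l.
  assert (Rmin (sqn x y - Rid^2) (Rd^2 - sqn x y) <= Rd^2 - sqn x y) by apply Rmin_r.
  unfold in_Omega, sqn in *. lra.
Qed.

Lemma open_line_y : forall Rid Rd x y, in_Omega Rid Rd x y ->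
  exists eta, 0 < eta /\ forall t, Rabs (t - y) < eta -> in_Omega Rid Rd x t.
Proof.
  intros Rid Rd x y H.
  assert (H' : in_Omega Rid Rd y x) by (unfold in_Omega in *; lra).
  destruct (open_line_x _ _ _ _ H') as [eta [He Ht]]. exists eta; split; auto.
  intros t Hlt. specialize (Ht t Hlt). unfold in_Omega in *; lra.
Qed.

Lemma limit1_in_ext : forall f g D l x, (forall h, f h = g h) ->
  limit1_in f D l x -> limit1_in g D l x.
Proof. intros f g D l x E H eps He. destruct (H eps He) as [a [Ha Hh]]. exists a; split; auto.
  intros h Hd. rewrite <- E. auto. Qed.

Lemma deriv_limit1 : forall g a l (D : R -> Prop) q eta, 0 < eta ->
  (forall h, D h -> Rabs h < eta -> h <> 0 /\ q h = (g (a + h) - g a) / h) ->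
  derivable_pt_lim g a l -> limit1_in q D l 0.
Proof.
  intros g a l D q eta Heta Hq Hg eps He.
  destruct (Hg eps He) as [d Hd].
  assert (Hp : 0 < Rmin d eta) by (apply Rmin_pos; [apply cond_pos|lra]).
  exists (Rmin d eta); split; [lra|].
  intros h [HD Hdist]. change (Rabs (h - 0) < Rmin d eta) in Hdist. rewrite Rminus_0_r in Hdist.
  assert (Rmin d eta <= d) by apply Rmin_l. assert (Rmin d eta <= eta) by apply Rmin_r.
  destruct (Hq h HD ltac:(lra)) as [Hh0 ->].
  change (Rabs ((g (a + h) - g a) / h - l) < eps). apply Hd; auto. lra.
Qed.

Lemma limit_neg_contra : forall q (D : R -> Prop) L, limit1_in q D L 0 -> L < 0 ->
  (forall al, 0 < al -> exists h, D h /\ Rabs h < al /\ 0 <= q h) -> False.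
Proof.
  intros q D L Hl HL Hpts.
  destruct (Hl (- L)) as [al [Hal H]]; [lra|].
  destruct (Hpts al Hal) as [h [HD [Hh Hq]]].
  assert (Hd : dist R_met h 0 < al)
    by (change (Rabs (h - 0) < al); rewrite Rminus_0_r; exact Hh).
  specialize (H h (conj HD Hd)).
  change (Rabs (q h - L) < - L) in H. apply Rabs_def2 in H. lra.
Qed.

Section MaximumPrinciple.
Variables (Rid Rd : R) (w : R -> R -> R) (dl : R).
Hypotheses (HR : 0 < Rid < Rd) (Hw : harmonic_classical Rid Rd w) (Hdl : 0 < dl).

(* The perturbation of w by the strictly subharmonic barrier δ/r². *)
Let z (a b : R) : R := w a b + dl * / sqn a b.

(* z cannot attain its maximum over the closed annulus at an interior point:
   there z_xx + z_yy = Δ(δ/r²) = 4δ/r⁴ > 0. *)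
Lemma barrier_no_interior_max : forall px py, in_Omega Rid Rd px py ->
  (forall x y, in_closure Rid Rd x y -> z x y <= z px py) -> False.
Proof.
  intros px py HO Hmax.
  destruct Hw as [[ux [uy [uxx [uxy [uyx [uyy Hd]]]]]] _].
  destruct (Hd px py HO) as [_ [_ [Dxx [_ [_ [Dyy [_ [_ [_ [_ Hlap]]]]]]]]]].
  destruct (open_line_x _ _ _ _ HO) as [ex [Hex Hlx]].
  destruct (open_line_y _ _ _ _ HO) as [ey [Hey Hly]].
  assert (Hr : 0 < px ^ 2 + py ^ 2) by (destruct HO; nra).
  assert (Tx : uxx px py + dl * (6 * px^2 - 2 * py^2) / (px ^ 2 + py^2) ^ 3 <= 0).
  { apply (second_deriv_test (fun t => z t py)
      (fun t => ux t py + dl * (- (2 * t) / (t ^ 2 + py^2) ^ 2)) (px - ex) (px + ex) px); [lra| | |].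
    - intros t Ht. assert (HOt : in_Omega Rid Rd t py) by (apply Hlx; apply Rabs_def1; lra).
      destruct (Hd t py HOt) as [Dx _]. unfold z, sqn.
      apply dpl_plus; auto. apply barrier_d1. destruct HOt; nra.
    - apply dpl_plus; auto. apply barrier_d2. lra.
    - intros t Ht. assert (HOt : in_Omega Rid Rd t py) by (apply Hlx; apply Rabs_def1; lra).
      apply Hmax. destruct HOt; split; lra. }
  assert (Ty : uyy px py + dl * (6 * py^2 - 2 * px^2) / (py ^ 2 + px^2) ^ 3 <= 0).
  { apply (second_deriv_test (fun t => z px t)
      (fun t => uy px t + dl * (- (2 * t) / (t ^ 2 + px^2) ^ 2)) (py - ey) (py + ey) py); [lra| | |].
    - intros t Ht. assert (HOt : in_Omega Rid Rd px t) by (apply Hly; apply Rabs_def1; lra).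
      destruct (Hd px t HOt) as [_ [Dy _]]. unfold z, sqn.
      apply (dpl_ext (fun s => w px s + dl * / (s ^ 2 + px ^ 2)) _ _
               (uy px t + dl * (- (2 * t) / (t ^ 2 + px^2) ^ 2)));
        [intro s; rewrite (Rplus_comm (s ^ 2)); reflexivity|reflexivity|].
      apply dpl_plus; auto. apply barrier_d1. destruct HOt; nra.
    - apply dpl_plus; auto. apply barrier_d2. lra.
    - intros t Ht. assert (HOt : in_Omega Rid Rd px t) by (apply Hly; apply Rabs_def1; lra).
      apply Hmax. destruct HOt; split; lra. }
  assert (E : dl * (6 * px^2 - 2 * py^2) / (px ^ 2 + py^2) ^ 3
              + dl * (6 * py^2 - 2 * px^2) / (py ^ 2 + px^2) ^ 3
              = 4 * dl / (px ^ 2 + py ^ 2) ^ 2) by (field; lra).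
  assert (0 < 4 * dl / (px ^ 2 + py ^ 2) ^ 2)
    by (apply Rdiv_lt_0_compat; [lra|apply pow_lt; lra]).
  lra.
Qed.

(* Nor on Γ_d when ∂w/∂n = 0 there: the outward normal derivative of z is
   that of δ/r², namely -2δ/R_d³ < 0. *)
Lemma barrier_no_outer_max : forall th, dn_outer Rd w th 0 ->
  (forall x y, in_closure Rid Rd x y -> z x y <= z (Rd * cos th) (Rd * sin th)) -> False.
Proof.
  intros th Hout Hmax.
  set (q := fun h => (ray z th (Rd + h) - ray z th Rd) / h).
  assert (Lq : limit1_in q (fun h => h < 0) (0 + dl * (- (2 * Rd) / (Rd ^ 2 + 0) ^ 2)) 0).
  { apply (limit1_in_ext (fun h => (ray w th (Rd + h) - ray w th Rd) / h +
             ((fun s => dl * / (s ^ 2 + 0)) (Rd + h) - (fun s => dl * / (s ^ 2 + 0)) Rd) / h)).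
    - intro h. unfold q, ray, z. rewrite !sqn_ray, !Rplus_0_r. unfold Rdiv; ring.
    - apply limit_plus; [apply Hout|].
      apply (deriv_limit1 (fun s => dl * / (s ^ 2 + 0)) Rd _ _ _ 1); [lra| |].
      + intros h Hh _. split; [lra|reflexivity].
      + apply barrier_d1. nra. }
  apply (limit_neg_contra q (fun h => h < 0) _ Lq).
  { rewrite Rplus_0_r.
    assert (0 < dl * (2 * Rd / (Rd ^ 2) ^ 2))
      by (apply Rmult_lt_0_compat; auto; apply Rdiv_lt_0_compat; [lra|apply pow_lt, pow_lt; lra]).
    unfold Rdiv in *. lra. }
  intros al Hal. set (h := - (Rmin al (Rd - Rid) / 2)).
  assert (Hm1 : Rmin al (Rd - Rid) <= al) by apply Rmin_l.
  assert (Hm2 : Rmin al (Rd - Rid) <= Rd - Rid) by apply Rmin_r.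
  assert (Hp0 : 0 < Rmin al (Rd - Rid)) by (apply Rmin_pos; lra).
  exists h. split; [unfold h; lra|]. split; [rewrite Rabs_left; unfold h; lra|].
  unfold q. apply div_nonneg; [unfold h; lra|].
  assert (ray z th (Rd + h) <= ray z th Rd); [|lra].
  apply Hmax. unfold in_closure. pose proof (sqn_ray (Rd + h) th) as Hs. unfold sqn in Hs.
  rewrite Hs. split; apply pow_incr; unfold h; lra.
Qed.

(* Hence, if w = 0 on Γ_id, the maximum of z is δ/R_id², attained on Γ_id. *)
Lemma barrier_max_bound :
  (forall th, w (Rid * cos th) (Rid * sin th) = 0) -> (forall th, dn_outer Rd w th 0) ->
  forall x y, in_closure Rid Rd x y -> w x y <= dl / Rid ^ 2.
Proof.
  intros Hin Hout x y Hxy.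
  assert (Hz : forall a b, in_closure Rid Rd a b -> cont2_in (in_closure Rid Rd) z a b).
  { intros a b Hab. unfold z. apply cont2_plus; [destruct Hw as [_ Hc]; apply Hc; auto|].
    apply cont2_scal, cont2_inv; [apply cont2_sqn|]. destruct Hab. unfold sqn. nra. }
  destruct (annulus_max Rid Rd z HR Hz) as [px [py [[Hp1 Hp2] Hmax]]].
  assert (Hzp : z px py <= dl / Rid ^ 2).
  { destruct (Rle_lt_or_eq_dec _ _ Hp1) as [Hl1|He1].
    - exfalso. destruct (Rle_lt_or_eq_dec _ _ Hp2) as [Hl2|He2].
      + apply (barrier_no_interior_max px py); [split|]; auto.
      + destruct (polar px py Rd ltac:(lra) He2) as [th [-> ->]].
        apply (barrier_no_outer_max th); auto.
    - destruct (polar px py Rid ltac:(lra) (eq_sym He1)) as [th [-> ->]].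
      unfold z. rewrite Hin, sqn_ray. unfold Rdiv. lra. }
  assert (z x y <= z px py) by (apply Hmax; auto).
  assert (0 < dl * / sqn x y)
    by (apply Rmult_lt_0_compat; auto; apply Rinv_0_lt_compat; destruct Hxy; unfold sqn; nra).
  unfold z in *. lra.
Qed.

End MaximumPrinciple.

(* Weak maximum principle: w <= 0 on the closed annulus (let δ -> 0). *)
Lemma harm_le0 : forall Rid Rd w, 0 < Rid < Rd -> harmonic_classical Rid Rd w ->
  (forall th, w (Rid * cos th) (Rid * sin th) = 0) ->
  (forall th, dn_outer Rd w th 0) ->
  forall x y, in_closure Rid Rd x y -> w x y <= 0.
Proof.
  intros Rid Rd w HR Hw Hin Hout x y Hxy.
  apply Rnot_lt_le. intro Hpos.
  assert (HRid2 : 0 < Rid ^ 2) by (apply pow_lt; lra).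
  assert (Hdl : 0 < w x y * Rid ^ 2 / 2)
    by (apply Rdiv_lt_0_compat; [apply Rmult_lt_0_compat|]; lra).
  pose proof (barrier_max_bound Rid Rd w _ HR Hw Hdl Hin Hout x y Hxy) as Hb.
  replace (w x y * Rid ^ 2 / 2 / Rid ^ 2) with (w x y / 2) in Hb by (field; lra).
  lra.
Qed.

(** * Linearity of the boundary value problems *)

Lemma harm_lin : forall Rid Rd u v a b, harmonic_classical Rid Rd u -> harmonic_classical Rid Rd v ->
  harmonic_classical Rid Rd (fun x y => a * u x y + b * v x y).
Proof.
  intros Rid Rd u v a b [[ux [uy [uxx [uxy [uyx [uyy Hu]]]]]] Hcu] [[vx [vy [vxx [vxy [vyx [vyy Hv]]]]]] Hcv].
  split.
  - exists (fun x y => a * ux x y + b * vx x y), (fun x y => a * uy x y + b * vy x y),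
      (fun x y => a * uxx x y + b * vxx x y), (fun x y => a * uxy x y + b * vxy x y),
      (fun x y => a * uyx x y + b * vyx x y), (fun x y => a * uyy x y + b * vyy x y).
    intros x y Hxy.
    destruct (Hu x y Hxy) as [u1 [u2 [u3 [u4 [u5 [u6 [u7 [u8 [u9 [u10 u11]]]]]]]]]].
    destruct (Hv x y Hxy) as [v1 [v2 [v3 [v4 [v5 [v6 [v7 [v8 [v9 [v10 v11]]]]]]]]]].
    repeat split; try (apply dpl_plus; apply dpl_scal; assumption);
      try (apply cont2_plus; apply cont2_scal; assumption).
    replace (- (a * uxx x y + b * vxx x y + (a * uyy x y + b * vyy x y)))
      with (a * (- (uxx x y + uyy x y)) + b * (- (vxx x y + vyy x y))) by ring.
    rewrite u11, v11. ring.
  - intros x y Hxy. apply cont2_plus; apply cont2_scal; auto.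
Qed.

Lemma harm_const : forall Rid Rd c, harmonic_classical Rid Rd (fun _ _ => c).
Proof.
  intros. split.
  - exists (fun _ _ => 0), (fun _ _ => 0), (fun _ _ => 0), (fun _ _ => 0), (fun _ _ => 0), (fun _ _ => 0).
    intros x y _. repeat split; try apply derivable_pt_lim_const; try apply cont2_const. ring.
  - intros; apply cont2_const.
Qed.

Lemma harm_ext : forall Rid Rd u v, (forall x y, u x y = v x y) -> harmonic_classical Rid Rd u -> harmonic_classical Rid Rd v.
Proof.
  intros Rid Rd u v E [[ux [uy [uxx [uxy [uyx [uyy Hu]]]]]] Hcu]. split.
  - exists ux, uy, uxx, uxy, uyx, uyy. intros x y Hxy.
    destruct (Hu x y Hxy) as [u1 [u2 [u3 [u4 [u5 [u6 [u7 [u8 [u9 [u10 u11]]]]]]]]]].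
    repeat split; auto.
    + apply (dpl_ext (fun t => u t y) _ _ (ux x y)); auto.
    + apply (dpl_ext (fun t => u x t) _ _ (uy x y)); auto.
  - intros x y Hxy. apply (cont2_ext _ u); auto.
Qed.

Lemma limit_const : forall c D x, limit1_in (fun _ => c) D c x.
Proof. intros c D x eps He. exists 1; split; [lra|]. intros. change (Rabs (c - c) < eps).
  rewrite Rminus_diag, Rabs_R0; lra. Qed.

Lemma limit_lin : forall f g D l1 l2 x a b, limit1_in f D l1 x -> limit1_in g D l2 x ->
  limit1_in (fun h => a * f h + b * g h) D (a * l1 + b * l2) x.
Proof. intros. apply limit_plus; apply limit_mul; auto; apply limit_const. Qed.

Lemma dn_outer_lin : forall Rd u v th l1 l2 a b, dn_outer Rd u th l1 -> dn_outer Rd v th l2 ->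
  dn_outer Rd (fun x y => a * u x y + b * v x y) th (a * l1 + b * l2).
Proof.
  intros. unfold dn_outer in *. eapply limit1_in_ext; [|apply limit_lin; [exact H|exact H0]].
  intro h. unfold ray. unfold Rdiv. ring.
Qed.

Lemma dn_inner_lin : forall Rid u v th l1 l2 a b, dn_inner Rid u th l1 -> dn_inner Rid v th l2 ->
  dn_inner Rid (fun x y => a * u x y + b * v x y) th (a * l1 + b * l2).
Proof.
  intros. unfold dn_inner in *. eapply limit1_in_ext; [|apply limit_lin; [exact H|exact H0]].
  intro h. unfold ray. unfold Rdiv. ring.
Qed.

Lemma dn_outer_const : forall Rd c th, dn_outer Rd (fun _ _ => c) th 0.
Proof. intros. unfold dn_outer. eapply limit1_in_ext; [|apply (limit_const 0)].
  intro h; unfold ray, Rdiv; ring. Qed.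
Lemma dn_inner_const : forall Rid c th, dn_inner Rid (fun _ _ => c) th 0.
Proof. intros. unfold dn_inner. eapply limit1_in_ext; [|apply (limit_const 0)].
  intro h; unfold ray, Rdiv; ring. Qed.

Lemma dn_outer_ext : forall Rd u v th l l', (forall x y, u x y = v x y) -> l = l' -> dn_outer Rd u th l -> dn_outer Rd v th l'.
Proof. intros Rd u v th l l' E <- H. unfold dn_outer in *. eapply limit1_in_ext; [|exact H].
  intro h; unfold ray; rewrite !E; reflexivity. Qed.
Lemma dn_inner_ext : forall Rid u v th l l', (forall x y, u x y = v x y) -> l = l' -> dn_inner Rid u th l -> dn_inner Rid v th l'.
Proof. intros Rid u v th l l' E <- H. unfold dn_inner in *. eapply limit1_in_ext; [|exact H].
  intro h; unfold ray; rewrite !E; reflexivity. Qed.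

(* Uniqueness for the homogeneous mixed problem: w = 0 on Γ_id and
   ∂w/∂n = 0 on Γ_d force w = 0 (apply the maximum principle to w and -w). *)
Lemma harm_zero : forall Rid Rd w, 0 < Rid < Rd -> harmonic_classical Rid Rd w ->
  (forall th, w (Rid * cos th) (Rid * sin th) = 0) ->
  (forall th, dn_outer Rd w th 0) ->
  forall x y, in_closure Rid Rd x y -> w x y = 0.
Proof.
  intros Rid Rd w HR Hw Hin Hout x y Hxy. apply Rle_antisym.
  - apply (harm_le0 Rid Rd w); auto.
  - assert (H : (fun a b => -1 * w a b + 0 * w a b) x y <= 0).
    { apply (harm_le0 Rid Rd (fun a b => -1 * w a b + 0 * w a b)); auto.
      - apply (harm_lin Rid Rd w w (-1) 0); auto.
      - intro th. simpl. rewrite Hin. ring.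
      - intro th. apply (dn_outer_ext Rd (fun a b => -1 * w a b + 0 * w a b) _ th (-1 * 0 + 0 * 0)); [reflexivity|ring|]. apply dn_outer_lin; auto. }
    simpl in H. lra.
Qed.

Lemma Cx_eq : forall z w : Cx, fst z = fst w -> snd z = snd w -> z = w.
Proof. intros [a b] [c d]; simpl; intros -> ->; reflexivity. Qed.

Lemma harmC_lin : forall Rid Rd (U V : R -> R -> Cx) (c d : Cx), harmonicC Rid Rd U -> harmonicC Rid Rd V ->
  harmonicC Rid Rd (fun x y => Cadd (Cmul c (U x y)) (Cmul d (V x y))).
Proof.
  intros Rid Rd U V c d [U1 U2] [V1 V2]. split.
  - apply (harm_ext _ _ (fun x y => fst c * re_f U x y + fst d * re_f V x y + ((- snd c) * im_f U x y + (- snd d) * im_f V x y))).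
    + intros. unfold re_f, im_f, Cadd, Cmul. simpl. ring.
    + apply (harm_ext _ _ (fun x y => 1 * (fst c * re_f U x y + fst d * re_f V x y) + 1 * ((- snd c) * im_f U x y + (- snd d) * im_f V x y))).
      { intros; ring. }
      apply harm_lin; apply harm_lin; auto.
  - apply (harm_ext _ _ (fun x y => 1 * (fst c * im_f U x y + fst d * im_f V x y) + 1 * (snd c * re_f U x y + snd d * re_f V x y))).
    + intros. unfold re_f, im_f, Cadd, Cmul. simpl. ring.
    + apply harm_lin; apply harm_lin; auto.
Qed.

Lemma harmC_const : forall Rid Rd (c : Cx), harmonicC Rid Rd (fun _ _ => c).
Proof. intros. split; apply harm_const. Qed.

Lemma harmC_ext : forall Rid Rd U V, (forall x y, U x y = V x y) -> harmonicC Rid Rd U -> harmonicC Rid Rd V.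
Proof. intros Rid Rd U V E [H1 H2]. split; [apply (harm_ext _ _ (re_f U))|apply (harm_ext _ _ (im_f U))]; auto;
  intros; unfold re_f, im_f; rewrite E; auto. Qed.

Lemma dn_outerC_lin : forall Rd (U V : R -> R -> Cx) (c d : Cx) th l1 l2, dn_outerC Rd U th l1 -> dn_outerC Rd V th l2 ->
  dn_outerC Rd (fun x y => Cadd (Cmul c (U x y)) (Cmul d (V x y))) th (Cadd (Cmul c l1) (Cmul d l2)).
Proof.
  intros Rd U V c d th l1 l2 [U1 U2] [V1 V2]. split.
  - apply (dn_outer_ext Rd (fun x y => 1 * (fst c * re_f U x y + fst d * re_f V x y) + 1 * ((- snd c) * im_f U x y + (- snd d) * im_f V x y)) _ th
      (1 * (fst c * fst l1 + fst d * fst l2) + 1 * ((- snd c) * snd l1 + (- snd d) * snd l2))).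
    + intros. unfold re_f, im_f, Cadd, Cmul. simpl. ring.
    + unfold Cadd, Cmul; simpl; ring.
    + apply dn_outer_lin; apply dn_outer_lin; auto.
  - apply (dn_outer_ext Rd (fun x y => 1 * (fst c * im_f U x y + fst d * im_f V x y) + 1 * (snd c * re_f U x y + snd d * re_f V x y)) _ th
      (1 * (fst c * snd l1 + fst d * snd l2) + 1 * (snd c * fst l1 + snd d * fst l2))).
    + intros. unfold re_f, im_f, Cadd, Cmul. simpl. ring.
    + unfold Cadd, Cmul; simpl; ring.
    + apply dn_outer_lin; apply dn_outer_lin; auto.
Qed.

Lemma dn_innerC_lin : forall Rid (U V : R -> R -> Cx) (c d : Cx) th l1 l2, dn_innerC Rid U th l1 -> dn_innerC Rid V th l2 ->
  dn_innerC Rid (fun x y => Cadd (Cmul c (U x y)) (Cmul d (V x y))) th (Cadd (Cmul c l1) (Cmul d l2)).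
Proof.
  intros Rid U V c d th l1 l2 [U1 U2] [V1 V2]. split.
  - apply (dn_inner_ext Rid (fun x y => 1 * (fst c * re_f U x y + fst d * re_f V x y) + 1 * ((- snd c) * im_f U x y + (- snd d) * im_f V x y)) _ th
      (1 * (fst c * fst l1 + fst d * fst l2) + 1 * ((- snd c) * snd l1 + (- snd d) * snd l2))).
    + intros. unfold re_f, im_f, Cadd, Cmul. simpl. ring.
    + unfold Cadd, Cmul; simpl; ring.
    + apply dn_inner_lin; apply dn_inner_lin; auto.
  - apply (dn_inner_ext Rid (fun x y => 1 * (fst c * im_f U x y + fst d * im_f V x y) + 1 * (snd c * re_f U x y + snd d * re_f V x y)) _ th
      (1 * (fst c * snd l1 + fst d * snd l2) + 1 * (snd c * fst l1 + snd d * fst l2))).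
    + intros. unfold re_f, im_f, Cadd, Cmul. simpl. ring.
    + unfold Cadd, Cmul; simpl; ring.
    + apply dn_inner_lin; apply dn_inner_lin; auto.
Qed.

Lemma dn_outerC_ext : forall Rd U V th l l', (forall x y, U x y = V x y) -> l = l' -> dn_outerC Rd U th l -> dn_outerC Rd V th l'.
Proof. intros Rd U V th l l' E <- [H1 H2]. split; [apply (dn_outer_ext Rd (re_f U) _ th (fst l))|apply (dn_outer_ext Rd (im_f U) _ th (snd l))]; auto;
  intros; unfold re_f, im_f; rewrite E; auto. Qed.
Lemma dn_innerC_ext : forall Rid U V th l l', (forall x y, U x y = V x y) -> l = l' -> dn_innerC Rid U th l -> dn_innerC Rid V th l'.
Proof. intros Rid U V th l l' E <- [H1 H2]. split; [apply (dn_inner_ext Rid (re_f U) _ th (fst l))|apply (dn_inner_ext Rid (im_f U) _ th (snd l))]; auto;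
  intros; unfold re_f, im_f; rewrite E; auto. Qed.

Lemma dn_outerC_const : forall Rd c th, dn_outerC Rd (fun _ _ => c) th C0.
Proof. intros; split; unfold re_f, im_f; simpl; apply dn_outer_const. Qed.
Lemma dn_innerC_const : forall Rid c th, dn_innerC Rid (fun _ _ => c) th C0.
Proof. intros; split; unfold re_f, im_f; simpl; apply dn_inner_const. Qed.

Lemma harmC_zero : forall Rid Rd W, 0 < Rid < Rd -> harmonicC Rid Rd W ->
  (forall th, trace Rid W th = C0) -> (forall th, dn_outerC Rd W th C0) ->
  forall x y, in_closure Rid Rd x y -> W x y = C0.
Proof.
  intros Rid Rd W HR [H1 H2] Hin Hout x y Hxy. apply Cx_eq; simpl.
  - apply (harm_zero Rid Rd (re_f W)); auto.
    + intro th. unfold re_f. specialize (Hin th). unfold trace in Hin. rewrite Hin. reflexivity.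
    + intro th. apply (Hout th).
  - apply (harm_zero Rid Rd (im_f W)); auto.
    + intro th. unfold im_f. specialize (Hin th). unfold trace in Hin. rewrite Hin. reflexivity.
    + intro th. apply (Hout th).
Qed.


(** * Harmonic functions from holomorphic ones *)

(* [field], closing the nonzero side conditions that are ring-equal to a
   nonzero hypothesis. *)
Ltac neq_close := match goal with |- ?a <> 0 => match goal with H : ?b <> 0 |- _ =>
   let HH := fresh in intro HH; apply H; rewrite <- HH; ring end end.
Ltac fld := field; repeat split; try neq_close.

(* A complex function F = u + iv is holomorphic at (x, y) with derivative G
   when ∂F/∂x = G and ∂F/∂y = iG (Cauchy-Riemann); [ccont] is continuity of
   both components. *)
Definition CI (z : Cx) : Cx := (- snd z, fst z).
Definition Dx (F G : R -> R -> Cx) (x y : R) : Prop :=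
  derivable_pt_lim (fun t => fst (F t y)) x (fst (G x y)) /\
  derivable_pt_lim (fun t => snd (F t y)) x (snd (G x y)).
Definition Dy (F G : R -> R -> Cx) (x y : R) : Prop :=
  derivable_pt_lim (fun t => fst (F x t)) y (fst (G x y)) /\
  derivable_pt_lim (fun t => snd (F x t)) y (snd (G x y)).
Definition holo_at (F G : R -> R -> Cx) (x y : R) : Prop :=
  Dx F G x y /\ Dy F (fun a b => CI (G a b)) x y.
Definition ccont (F : R -> R -> Cx) (x y : R) : Prop :=
  cont2_in (fun _ _ => True) (fun a b => fst (F a b)) x y /\
  cont2_in (fun _ _ => True) (fun a b => snd (F a b)) x y.

Lemma holo_ext : forall F F' G G' x y, (forall a b, F a b = F' a b) -> G x y = G' x y ->
  holo_at F G x y -> holo_at F' G' x y.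
Proof.
  intros F F' G G' x y EF EG [[H1 H2] [H3 H4]].
  split; split.
  - apply (dpl_ext (fun t => fst (F t y)) _ _ (fst (G x y))); auto. intro; rewrite EF; auto. rewrite EG; auto.
  - apply (dpl_ext (fun t => snd (F t y)) _ _ (snd (G x y))); auto. intro; rewrite EF; auto. rewrite EG; auto.
  - apply (dpl_ext (fun t => fst (F x t)) _ _ (fst (CI (G x y)))); auto. intro; rewrite EF; auto. rewrite EG; auto.
  - apply (dpl_ext (fun t => snd (F x t)) _ _ (snd (CI (G x y)))); auto. intro; rewrite EF; auto. rewrite EG; auto.
Qed.

Lemma holo_const : forall c x y, holo_at (fun _ _ => c) (fun _ _ => C0) x y.
Proof. intros. split; split; simpl; (eapply dpl_ext; [intro; reflexivity| |apply derivable_pt_lim_const]); ring. Qed.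

Lemma holo_z : forall x y, holo_at (fun a b => (a, b)) (fun _ _ => (1, 0)) x y.
Proof. intros. split; split; simpl.
  - apply derivable_pt_lim_id.
  - apply derivable_pt_lim_const.
  - eapply dpl_ext; [intro; reflexivity| |apply derivable_pt_lim_const]; ring.
  - apply derivable_pt_lim_id. Qed.

Lemma holo_mul : forall F F' G G' x y, holo_at F F' x y -> holo_at G G' x y ->
  holo_at (fun a b => Cmul (F a b) (G a b)) (fun a b => Cadd (Cmul (F' a b) (G a b)) (Cmul (F a b) (G' a b))) x y.
Proof.
  intros F F' G G' x y [[F1 F2] [F3 F4]] [[G1 G2] [G3 G4]].
  unfold Cmul, Cadd, CI in *; simpl in *.
  split; split; simpl.
  - eapply dpl_val; [apply dpl_minus; apply dpl_mult; eassumption|]. cbv beta; ring.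
  - eapply dpl_val; [apply dpl_plus; apply dpl_mult; eassumption|]. cbv beta; ring.
  - eapply dpl_val; [apply dpl_minus; apply dpl_mult; eassumption|]. cbv beta; ring.
  - eapply dpl_val; [apply dpl_plus; apply dpl_mult; eassumption|]. cbv beta; ring.
Qed.

Lemma holo_scal : forall c F G x y, holo_at F G x y ->
  holo_at (fun a b => Cmul c (F a b)) (fun a b => Cmul c (G a b)) x y.
Proof.
  intros c F G x y H.
  eapply holo_ext; [intros; reflexivity| |apply (holo_mul (fun _ _ => c) (fun _ _ => C0) F G x y (holo_const c x y) H)].
  unfold Cadd, Cmul, C0; simpl. apply Cx_eq; simpl; ring.
Qed.

Definition zinv (a b : R) : Cx := (a / (a ^ 2 + b ^ 2), - b / (a ^ 2 + b ^ 2)).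

Lemma holo_zinv : forall x y, x ^ 2 + y ^ 2 <> 0 ->
  holo_at zinv (fun a b => Cmul (-1, 0) (Cmul (zinv a b) (zinv a b))) x y.
Proof.
  intros x y Hr.
  assert (Hd1 : forall c t, t ^ 2 + c <> 0 -> derivable_pt_lim (fun s => / (s ^ 2 + c)) t (- (2 * t) / (t ^ 2 + c) ^ 2)).
  { intros c t Ht. eapply dpl_val; [apply dpl_inv; [apply dpl_plus; [apply derivable_pt_lim_pow|apply derivable_pt_lim_const]|auto]|].
    simpl in *. fld. }
  assert (Hr' : y ^ 2 + x ^ 2 <> 0) by (rewrite Rplus_comm; auto).
  unfold zinv, Cmul, CI; split; split; simpl.
  - eapply dpl_val; [unfold Rdiv; apply dpl_mult; [apply derivable_pt_lim_id|apply Hd1; auto]|].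
    cbv beta. simpl in *; fld.
  - eapply dpl_val; [unfold Rdiv; apply (dpl_mult (fun _ => - y)); [apply derivable_pt_lim_const|apply Hd1; auto]|].
    cbv beta. simpl in *; fld.
  - apply (dpl_ext (fun t => x * / (t ^ 2 + x ^ 2)) _ _ (0 * / (y ^ 2 + x ^ 2) + x * (- (2 * y) / (y ^ 2 + x ^ 2) ^ 2))).
    + intro; unfold Rdiv; rewrite (Rplus_comm (x ^ 2)); reflexivity.
    + simpl in *; fld.
    + eapply dpl_val; [apply (dpl_mult (fun _ => x)); [apply derivable_pt_lim_const|apply Hd1; auto]|]. cbv beta. ring.
  - apply (dpl_ext (fun t => - t * / (t ^ 2 + x ^ 2)) _ _ (- 1 * / (y ^ 2 + x ^ 2) + - y * (- (2 * y) / (y ^ 2 + x ^ 2) ^ 2))).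
    + intro; unfold Rdiv; rewrite (Rplus_comm (x ^ 2)); reflexivity.
    + simpl in *; fld.
    + eapply dpl_val; [apply (dpl_mult (fun t => - t)); [apply dpl_opp; apply derivable_pt_lim_id|apply Hd1; auto]|]. cbv beta. ring.
Qed.

Fixpoint Cpow (z : Cx) (n : nat) : Cx :=
  match n with O => (1, 0) | S m => Cmul z (Cpow z m) end.
Definition Pw (n : nat) (a b : R) : Cx := Cpow (a, b) n.
Definition Qw (n : nat) (a b : R) : Cx := Cpow (zinv a b) n.

Lemma holo_Pw : forall n x y, holo_at (Pw n) (fun a b => Cscal (INR n) (Pw (pred n) a b)) x y.
Proof.
  induction n; intros x y.
  - eapply holo_ext; [intros; reflexivity| |apply (holo_const (1,0))].
    unfold Cscal, C0; simpl. apply Cx_eq; simpl; ring.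
  - eapply holo_ext; [intros; reflexivity| |apply (holo_mul _ _ _ _ x y (holo_z x y) (IHn x y))].
    destruct n.
    + unfold Pw, Cscal, Cadd, Cmul; simpl. apply Cx_eq; simpl; ring.
    + unfold Pw. simpl pred. change (Cpow (x, y) (S n)) with (Cmul (x,y) (Cpow (x,y) n)).
      destruct (Cpow (x, y) n) as [p q].
      unfold Cscal, Cadd, Cmul. rewrite ?S_INR. apply Cx_eq; simpl; rewrite ?S_INR; ring.
Qed.

Lemma holo_Qw : forall n x y, x ^ 2 + y ^ 2 <> 0 ->
  holo_at (Qw n) (fun a b => Cscal (- INR n) (Qw (S n) a b)) x y.
Proof.
  induction n; intros x y Hr.
  - eapply holo_ext; [intros; reflexivity| |apply (holo_const (1,0))].
    unfold Cscal, C0; simpl. apply Cx_eq; simpl; ring.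
  - eapply holo_ext; [intros; reflexivity| |apply (holo_mul _ _ _ _ x y (holo_zinv x y Hr) (IHn x y Hr))].
    unfold Qw. change (Cpow (zinv x y) (S (S n))) with (Cmul (zinv x y) (Cpow (zinv x y) (S n))).
    change (Cpow (zinv x y) (S n)) with (Cmul (zinv x y) (Cpow (zinv x y) n)).
    destruct (Cpow (zinv x y) n) as [p q]. destruct (zinv x y) as [u v].
    unfold Cscal, Cadd, Cmul. rewrite ?S_INR. apply Cx_eq; simpl; rewrite ?S_INR; ring.
Qed.

Lemma ccont_const : forall c x y, ccont (fun _ _ => c) x y.
Proof. intros; split; apply cont2_const. Qed.
Lemma ccont_z : forall x y, ccont (fun a b => (a, b)) x y.
Proof. intros; split; [apply cont2_fst|apply cont2_snd]. Qed.
Lemma ccont_mul : forall F G x y, ccont F x y -> ccont G x y -> ccont (fun a b => Cmul (F a b) (G a b)) x y.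
Proof. intros F G x y [F1 F2] [G1 G2]; unfold Cmul; split; simpl.
  - apply cont2_minus; apply cont2_mult; auto.
  - apply cont2_plus; apply cont2_mult; auto. Qed.
Lemma ccont_scal : forall c F x y, ccont F x y -> ccont (fun a b => Cscal c (F a b)) x y.
Proof. intros c F x y [F1 F2]; unfold Cscal; split; simpl; apply cont2_scal; auto. Qed.
Lemma ccont_zinv : forall x y, x ^ 2 + y ^ 2 <> 0 -> ccont zinv x y.
Proof.
  intros x y Hr. unfold zinv; split; simpl; unfold Rdiv.
  - apply cont2_mult; [apply cont2_fst|]. apply cont2_inv; auto. apply cont2_sqn.
  - apply cont2_mult; [apply cont2_opp, cont2_snd|]. apply cont2_inv; auto. apply cont2_sqn.
Qed.
Lemma ccont_Pw : forall n x y, ccont (Pw n) x y.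
Proof. induction n; intros; [apply ccont_const|]. apply (ccont_mul (fun a b => (a,b)) (Pw n)); auto. apply ccont_z. Qed.
Lemma ccont_Qw : forall n x y, x ^ 2 + y ^ 2 <> 0 -> ccont (Qw n) x y.
Proof. induction n; intros; [apply ccont_const|]. apply (ccont_mul zinv (Qw n)); auto. apply ccont_zinv; auto. Qed.

(* The real part of a function whose derivative G is itself holomorphic with
   continuous derivative is harmonic: Re F_xx + Re F_yy = Re(G' + i² G') = 0. *)
Lemma harm_real_holo : forall Rid Rd u G H,
  (forall x y, in_Omega Rid Rd x y ->
     derivable_pt_lim (fun t => u t y) x (fst (G x y)) /\
     derivable_pt_lim (fun t => u x t) y (- snd (G x y)) /\
     holo_at G H x y /\ ccont H x y) ->
  (forall x y, in_closure Rid Rd x y -> cont2_in (in_closure Rid Rd) u x y) ->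
  harmonic_classical Rid Rd u.
Proof.
  intros Rid Rd u G H Hh Hc. split; auto.
  exists (fun x y => fst (G x y)), (fun x y => - snd (G x y)), (fun x y => fst (H x y)),
    (fun x y => - snd (H x y)), (fun x y => - snd (H x y)), (fun x y => - fst (H x y)).
  intros x y Hxy. destruct (Hh x y Hxy) as [D1 [D2 [[[G1 G2] [G3 G4]] [C1 C2]]]].
  unfold CI in *; simpl in *.
  repeat split; auto.
  - apply dpl_opp; auto.
  - apply dpl_opp; auto.
  - apply cont2_opp; auto.
  - apply cont2_opp; auto.
  - apply cont2_opp; auto.
  - ring.
Qed.

(* Both components of such a function are harmonic (the imaginary part is
   the real part of -iF). *)
Lemma harmC_holo : forall Rid Rd F G H,
  (forall x y, in_Omega Rid Rd x y -> holo_at F G x y /\ holo_at G H x y /\ ccont H x y) ->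
  (forall x y, in_closure Rid Rd x y -> cont2_in (in_closure Rid Rd) (re_f F) x y /\ cont2_in (in_closure Rid Rd) (im_f F) x y) ->
  harmonicC Rid Rd F.
Proof.
  intros Rid Rd F G H Hh Hc. split.
  - apply (harm_real_holo _ _ _ G H).
    + intros x y Hxy. destruct (Hh x y Hxy) as [[[F1 F2] [F3 F4]] [HG HH]]. unfold CI in *; simpl in *.
      split; [exact F1|split; [exact F3|split; auto]].
    + intros; apply Hc; auto.
  - apply (harm_ext _ _ (re_f (fun a b => Cmul (0, -1) (F a b)))).
    + intros. unfold re_f, im_f, Cmul; simpl. ring.
    + apply (harm_real_holo _ _ _ (fun a b => Cmul (0, -1) (G a b)) (fun a b => Cmul (0, -1) (H a b))).
      * intros x y Hxy. destruct (Hh x y Hxy) as [HF [HG HH]].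
        destruct (holo_scal (0, -1) _ _ _ _ HF) as [[F1 F2] [F3 F4]].
        unfold CI in *; simpl in *. split; [exact F1|split; [exact F3|split]].
        -- apply holo_scal; auto.
        -- apply (ccont_mul (fun _ _ => (0, -1)) H); auto. apply ccont_const.
      * intros x y Hxy. destruct (Hc x y Hxy) as [C1 C2].
        apply (cont2_ext _ (im_f F)); [intros; unfold re_f, im_f, Cmul; simpl; ring|auto].
Qed.

Lemma in_closure_pos : forall Rid Rd x y, 0 < Rid -> in_closure Rid Rd x y -> x ^ 2 + y ^ 2 <> 0.
Proof. intros Rid Rd x y H [H1 _]. assert (0 < Rid ^ 2) by (apply pow_lt; lra). lra. Qed.
Lemma in_Omega_pos : forall Rid Rd x y, 0 < Rid -> in_Omega Rid Rd x y -> x ^ 2 + y ^ 2 <> 0.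
Proof. intros Rid Rd x y H [H1 _]. assert (0 < Rid ^ 2) by (apply pow_lt; lra). lra. Qed.

Lemma cscal_cmul : forall a z, Cscal a z = Cmul (a, 0) z.
Proof. intros a [p q]; unfold Cscal, Cmul; simpl; apply Cx_eq; simpl; ring. Qed.

Lemma harmC_Pw : forall Rid Rd n, harmonicC Rid Rd (Pw n).
Proof.
  intros Rid Rd n.
  apply (harmC_holo _ _ _ (fun a b => Cscal (INR n) (Pw (pred n) a b))
           (fun a b => Cmul (INR n, 0) (Cscal (INR (pred n)) (Pw (pred (pred n)) a b)))).
  - intros x y _. split; [apply holo_Pw|split].
    + apply (holo_ext (fun a b => Cmul (INR n, 0) (Pw (pred n) a b)) _
        (fun a b => Cmul (INR n, 0) (Cscal (INR (pred n)) (Pw (pred (pred n)) a b))) _ x y);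
        [intros; symmetry; apply cscal_cmul|reflexivity|apply holo_scal, holo_Pw].
    + apply (ccont_mul (fun _ _ => (INR n, 0))); [apply ccont_const|]. apply ccont_scal, ccont_Pw.
  - intros x y _. destruct (ccont_Pw n x y) as [C1 C2]. split; apply cont2_weaken; auto.
Qed.

Lemma harmC_Qw : forall Rid Rd n, 0 < Rid -> harmonicC Rid Rd (Qw n).
Proof.
  intros Rid Rd n HR.
  apply (harmC_holo _ _ _ (fun a b => Cscal (- INR n) (Qw (S n) a b))
           (fun a b => Cmul (- INR n, 0) (Cscal (- INR (S n)) (Qw (S (S n)) a b)))).
  - intros x y Hxy. pose proof (in_Omega_pos _ _ _ _ HR Hxy). split; [apply holo_Qw; auto|split].
    + apply (holo_ext (fun a b => Cmul (- INR n, 0) (Qw (S n) a b)) _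
        (fun a b => Cmul (- INR n, 0) (Cscal (- INR (S n)) (Qw (S (S n)) a b))) _ x y);
        [intros; symmetry; apply cscal_cmul|reflexivity|apply holo_scal, holo_Qw; auto].
    + apply (ccont_mul (fun _ _ => (- INR n, 0))); [apply ccont_const|]. apply ccont_scal, ccont_Qw; auto.
  - intros x y Hxy. destruct (ccont_Qw n x y (in_closure_pos _ _ _ _ HR Hxy)) as [C1 C2].
    split; apply cont2_weaken; auto.
Qed.

Definition Cconj (z : Cx) : Cx := (fst z, - snd z).

Lemma harmC_conj : forall Rid Rd F, harmonicC Rid Rd F -> harmonicC Rid Rd (fun a b => Cconj (F a b)).
Proof.
  intros Rid Rd F [H1 H2]. split.
  - apply (harm_ext _ _ (re_f F)); auto.
  - apply (harm_ext _ _ (fun a b => -1 * im_f F a b + 0 * im_f F a b)).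
    + intros; unfold re_f, im_f, Cconj; simpl; ring.
    + apply harm_lin; auto.
Qed.

(* log r = log(x² + y²)/2 is harmonic, being the real part of a primitive
   of 1/z. *)
Definition Lr (a b : R) : R := ln (a ^ 2 + b ^ 2) / 2.

Lemma harm_Lr : forall Rid Rd, 0 < Rid -> harmonic_classical Rid Rd Lr.
Proof.
  intros Rid Rd HR.
  apply (harm_real_holo _ _ _ zinv (fun a b => Cmul (-1, 0) (Cmul (zinv a b) (zinv a b)))).
  - intros x y Hxy. pose proof (in_Omega_pos _ _ _ _ HR Hxy) as Hr.
    assert (Hp : 0 < x ^ 2 + y ^ 2) by (pose proof (pow2_ge_0 x); pose proof (pow2_ge_0 y); lra).
    split; [|split; [|split]].
    + unfold Lr, zinv; simpl fst. eapply dpl_val.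
      * unfold Rdiv. apply (dpl_mult (fun t => ln (t ^ 2 + y ^ 2)) (fun _ => / 2)); [|apply derivable_pt_lim_const].
        apply (dpl_comp (fun t => t ^ 2 + y ^ 2) ln); [apply dpl_plus; [apply derivable_pt_lim_pow|apply derivable_pt_lim_const]|].
        apply derivable_pt_lim_ln; auto.
      * cbv beta. simpl. simpl in Hr. fld.
    + unfold Lr, zinv; simpl snd. eapply dpl_val.
      * unfold Rdiv. apply (dpl_mult (fun t => ln (x ^ 2 + t ^ 2)) (fun _ => / 2)); [|apply derivable_pt_lim_const].
        apply (dpl_comp (fun t => x ^ 2 + t ^ 2) ln); [apply dpl_plus; [apply derivable_pt_lim_const|apply derivable_pt_lim_pow]|].
        apply derivable_pt_lim_ln; auto.
      * cbv beta. simpl. simpl in Hr. fld.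
    + apply holo_zinv; auto.
    + apply (ccont_mul (fun _ _ => (-1, 0))); [apply ccont_const|]. apply ccont_mul; apply ccont_zinv; auto.
  - intros x y Hxy. unfold Lr. unfold Rdiv. apply cont2_mult; [|apply cont2_const].
    apply (cont2_comp _ ln sqn). apply cont2_sqn.
    pose proof (in_closure_pos _ _ _ _ HR Hxy) as Hr.
    assert (Hp : 0 < sqn x y) by (unfold sqn; pose proof (pow2_ge_0 x); pose proof (pow2_ge_0 y); lra).
    apply derivable_continuous_pt. exists (/ sqn x y). apply derivable_pt_lim_ln; auto.
Qed.

Lemma Pw_ray : forall n t th, Pw n (t * cos th) (t * sin th) = (t ^ n * cos (INR n * th), t ^ n * sin (INR n * th)).
Proof.
  induction n; intros t th.
  - unfold Pw; simpl. rewrite Rmult_0_l, cos_0, sin_0. apply Cx_eq; simpl; ring.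
  - unfold Pw in *. change (Cpow (t * cos th, t * sin th) (S n)) with (Cmul (t * cos th, t * sin th) (Cpow (t * cos th, t * sin th) n)).
    rewrite IHn. rewrite S_INR, Rmult_plus_distr_r, Rmult_1_l, cos_plus, sin_plus.
    unfold Cmul; apply Cx_eq; simpl; ring.
Qed.

Lemma zinv_ray : forall t th, t <> 0 -> zinv (t * cos th) (t * sin th) = (/ t * cos th, - (/ t * sin th)).
Proof.
  intros t th Ht. unfold zinv. pose proof (sqn_ray t th) as E. unfold sqn in E. rewrite E.
  apply Cx_eq; simpl; field; auto.
Qed.

Lemma Qw_ray : forall n t th, t <> 0 -> Qw n (t * cos th) (t * sin th) = ((/ t) ^ n * cos (INR n * th), - ((/ t) ^ n * sin (INR n * th))).
Proof.
  induction n; intros t th Ht.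
  - unfold Qw; simpl. rewrite Rmult_0_l, cos_0, sin_0. apply Cx_eq; simpl; ring.
  - unfold Qw in *. change (Cpow (zinv (t * cos th) (t * sin th)) (S n)) with (Cmul (zinv (t * cos th) (t * sin th)) (Cpow (zinv (t * cos th) (t * sin th)) n)).
    rewrite IHn by auto. rewrite zinv_ray by auto. rewrite S_INR, Rmult_plus_distr_r, Rmult_1_l, cos_plus, sin_plus.
    unfold Cmul; apply Cx_eq; simpl; ring.
Qed.

Lemma IZR_abs_pos : forall j, (0 <= j)%Z -> IZR j = INR (Z.abs_nat j).
Proof. intros. rewrite INR_IZR_INZ, Zabs2Nat.id_abs, Z.abs_eq; auto. Qed.
Lemma IZR_abs_neg : forall j, (j < 0)%Z -> IZR j = - INR (Z.abs_nat j).
Proof. intros. rewrite INR_IZR_INZ, Zabs2Nat.id_abs, Z.abs_neq by lia. rewrite opp_IZR. ring. Qed.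

Definition Umode (j : Z) (a b : R) : Cx :=
  if Z.leb 0 j then Pw (Z.abs_nat j) a b else Cconj (Pw (Z.abs_nat j) a b).
Definition Vmode (j : Z) (a b : R) : Cx :=
  if Z.leb 0 j then Cconj (Qw (Z.abs_nat j) a b) else Qw (Z.abs_nat j) a b.

Lemma Umode_ray : forall j t th, Umode j (t * cos th) (t * sin th) = Cscal (t ^ Z.abs_nat j) (Cexpi j th).
Proof.
  intros j t th. unfold Umode, Cexpi, Cscal, Cconj. destruct (Z.leb_spec 0 j).
  - rewrite Pw_ray, IZR_abs_pos by auto. reflexivity.
  - rewrite Pw_ray, IZR_abs_neg by auto. rewrite Ropp_mult_distr_l_reverse, cos_neg, sin_neg.
    apply Cx_eq; simpl; ring.
Qed.

Lemma Vmode_ray : forall j t th, t <> 0 -> Vmode j (t * cos th) (t * sin th) = Cscal ((/ t) ^ Z.abs_nat j) (Cexpi j th).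
Proof.
  intros j t th Ht. unfold Vmode, Cexpi, Cscal, Cconj. destruct (Z.leb_spec 0 j).
  - rewrite Qw_ray, IZR_abs_pos by auto. apply Cx_eq; simpl; ring.
  - rewrite Qw_ray, IZR_abs_neg by auto. rewrite Ropp_mult_distr_l_reverse, cos_neg, sin_neg.
    apply Cx_eq; simpl; ring.
Qed.

Lemma harmC_Umode : forall Rid Rd j, harmonicC Rid Rd (Umode j).
Proof.
  intros. unfold Umode. destruct (Z.leb 0 j).
  - apply harmC_Pw.
  - apply (harmC_conj _ _ (Pw (Z.abs_nat j))). apply harmC_Pw.
Qed.
Lemma harmC_Vmode : forall Rid Rd j, 0 < Rid -> harmonicC Rid Rd (Vmode j).
Proof.
  intros. unfold Vmode. destruct (Z.leb 0 j).
  - apply (harmC_conj _ _ (Qw (Z.abs_nat j))). apply harmC_Qw; auto.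
  - apply harmC_Qw; auto.
Qed.

Lemma dn_outerC_ray : forall Rd F th g e l, 0 < Rd ->
  (forall t, 0 < t -> F (t * cos th) (t * sin th) = Cscal (g t) e) ->
  derivable_pt_lim g Rd l -> dn_outerC Rd F th (Cscal l e).
Proof.
  intros Rd F th g e l HRd HF Hg. split; unfold dn_outer.
  - apply (deriv_limit1 (fun s => g s * fst e) Rd _ _ _ Rd HRd).
    + intros h Hh Habs. split; [lra|]. unfold ray, re_f. rewrite !HF.
      * reflexivity.
      * lra.
      * apply Rabs_def2 in Habs. lra.
    + eapply dpl_val; [apply (dpl_mult g (fun _ => fst e)); [exact Hg|apply derivable_pt_lim_const]|]. simpl; ring.
  - apply (deriv_limit1 (fun s => g s * snd e) Rd _ _ _ Rd HRd).
    + intros h Hh Habs. split; [lra|]. unfold ray, im_f. rewrite !HF.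
      * reflexivity.
      * lra.
      * apply Rabs_def2 in Habs. lra.
    + eapply dpl_val; [apply (dpl_mult g (fun _ => snd e)); [exact Hg|apply derivable_pt_lim_const]|]. simpl; ring.
Qed.

Lemma dn_innerC_ray : forall Rid F th g e l, 0 < Rid ->
  (forall t, 0 < t -> F (t * cos th) (t * sin th) = Cscal (g t) e) ->
  derivable_pt_lim g Rid l -> dn_innerC Rid F th (Cscal (- l) e).
Proof.
  intros Rid F th g e l HRd HF Hg. split; unfold dn_inner.
  - apply (deriv_limit1 (fun s => - (g s * fst e)) Rid _ _ _ Rid HRd).
    + intros h Hh Habs. split; [lra|]. unfold ray, re_f. rewrite !HF.
      * simpl. field. lra.
      * lra.
      * apply Rabs_def2 in Habs. lra.
    + eapply dpl_val; [apply dpl_opp; apply (dpl_mult g (fun _ => fst e)); [exact Hg|apply derivable_pt_lim_const]|]. simpl; ring.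
  - apply (deriv_limit1 (fun s => - (g s * snd e)) Rid _ _ _ Rid HRd).
    + intros h Hh Habs. split; [lra|]. unfold ray, im_f. rewrite !HF.
      * simpl. field. lra.
      * lra.
      * apply Rabs_def2 in Habs. lra.
    + eapply dpl_val; [apply dpl_opp; apply (dpl_mult g (fun _ => snd e)); [exact Hg|apply derivable_pt_lim_const]|]. simpl; ring.
Qed.

(** * Explicit solutions mode by mode *)

Section Modes.
Variables Rid Rd : R.
Hypothesis HR : 0 < Rid < Rd.

(* With n = |j|: W_j = (A r^n + B r^{-n}) e^{ijθ} equals e^{ijθ} on Γ_id,
   has zero normal derivative on Γ_d and trace γ_n e^{ijθ} there;
   H_j (a multiple of log(r/R_id) when j = 0) vanishes on Γ_id and has
   normal derivative -2γ_n e^{ijθ} on Γ_d. *)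
Definition Den (n : nat) := (Rid ^ n) ^ 2 + (Rd ^ n) ^ 2.
Definition Aw (n : nat) := Rid ^ n / Den n.
Definition Bw (n : nat) := Rid ^ n * (Rd ^ n) ^ 2 / Den n.
Definition gam (n : nat) := 2 * Rid ^ n * Rd ^ n / Den n.
Definition cH (n : nat) := -2 * gam n * Rd ^ n * Rd / (INR n * Den n).

Definition Wj (j : Z) (a b : R) : Cx :=
  Cadd (Cscal (Aw (Z.abs_nat j)) (Umode j a b)) (Cscal (Bw (Z.abs_nat j)) (Vmode j a b)).
Definition Hj (j : Z) (a b : R) : Cx :=
  match Z.abs_nat j with
  | O => (-2 * Rd * (Lr a b - ln Rid), 0)
  | S m => Cadd (Cscal (cH (S m)) (Umode j a b)) (Cscal (- cH (S m) * (Rid ^ S m) ^ 2) (Vmode j a b))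
  end.

Lemma Den_pos : forall n, 0 < Den n.
Proof. intros. unfold Den. assert (0 < Rd ^ n) by (apply pow_lt; lra). pose proof (pow2_ge_0 (Rid ^ n)). nra. Qed.

Lemma d_invpow : forall n t, t <> 0 ->
  derivable_pt_lim (fun s => (/ s) ^ n) t (INR n * (/ t) ^ pred n * (- 1 / t ^ 2)).
Proof.
  intros n t Ht.
  apply (dpl_comp (fun s => / s) (fun u => u ^ n)).
  - eapply dpl_val; [apply dpl_inv; [apply derivable_pt_lim_id|auto]|]. reflexivity.
  - apply derivable_pt_lim_pow.
Qed.

Lemma Wj_ray : forall j t th, 0 < t -> Wj j (t * cos th) (t * sin th) =
  Cscal (Aw (Z.abs_nat j) * t ^ Z.abs_nat j + Bw (Z.abs_nat j) * (/ t) ^ Z.abs_nat j) (Cexpi j th).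
Proof.
  intros j t th Ht. unfold Wj. rewrite Umode_ray, Vmode_ray by lra.
  unfold Cscal, Cadd. apply Cx_eq; simpl; ring.
Qed.

Lemma harmC_Wj : forall j, harmonicC Rid Rd (Wj j).
Proof.
  intro j. apply (harmC_ext _ _ (fun a b => Cadd (Cmul (Aw (Z.abs_nat j), 0) (Umode j a b)) (Cmul (Bw (Z.abs_nat j), 0) (Vmode j a b)))).
  - intros. unfold Wj. rewrite !cscal_cmul. reflexivity.
  - apply harmC_lin; [apply harmC_Umode|apply harmC_Vmode; lra].
Qed.

Lemma trace_Wj_Rid : forall j th, trace Rid (Wj j) th = Cexpi j th.
Proof.
  intros j th. unfold trace. rewrite Wj_ray by lra.
  replace (Aw (Z.abs_nat j) * Rid ^ Z.abs_nat j + Bw (Z.abs_nat j) * (/ Rid) ^ Z.abs_nat j) with 1.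
  - destruct (Cexpi j th); unfold Cscal; apply Cx_eq; simpl; ring.
  - pose proof (Den_pos (Z.abs_nat j)). unfold Aw, Bw. rewrite pow_inv. unfold Den in *.
    assert (Rid ^ Z.abs_nat j <> 0) by (apply pow_nonzero; lra). field. split; lra.
Qed.

Lemma trace_Wj_Rd : forall j th, trace Rd (Wj j) th = Cscal (gam (Z.abs_nat j)) (Cexpi j th).
Proof.
  intros j th. unfold trace. rewrite Wj_ray by lra. f_equal.
  pose proof (Den_pos (Z.abs_nat j)). unfold Aw, Bw, gam. rewrite pow_inv. unfold Den in *.
  assert (Rd ^ Z.abs_nat j <> 0) by (apply pow_nonzero; lra). field. split; lra.
Qed.

Lemma dn_Wj : forall j th, dn_outerC Rd (Wj j) th C0.
Proof.
  intros j th. set (n := Z.abs_nat j).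
  apply (dn_outerC_ext Rd (Wj j) _ th (Cscal 0 (Cexpi j th))); [reflexivity| |].
  { unfold Cscal, C0; apply Cx_eq; simpl; ring. }
  apply (dn_outerC_ray Rd (Wj j) th (fun t => Aw n * t ^ n + Bw n * (/ t) ^ n)); [lra|intros; apply Wj_ray; auto|].
  eapply dpl_val; [apply dpl_plus; apply dpl_scal; [apply derivable_pt_lim_pow|apply d_invpow; lra]|].
  pose proof (Den_pos n). unfold Aw, Bw. destruct n as [|m].
  - simpl. ring.
  - simpl pred. rewrite !pow_inv. simpl pow.
    assert (Rd ^ m <> 0) by (apply pow_nonzero; lra).
    unfold Den in *. simpl pow in *. field. repeat split; try lra.
    all: try (intro HH; apply H0; rewrite <- HH; ring).
Qed.

Lemma Hj_ray : forall j t th, 0 < t -> Hj j (t * cos th) (t * sin th) =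
  Cscal (match Z.abs_nat j with
         | O => -2 * Rd * (ln (t ^ 2) / 2 - ln Rid)
         | S m => cH (S m) * t ^ S m + (- cH (S m) * (Rid ^ S m) ^ 2) * (/ t) ^ S m end) (Cexpi j th).
Proof.
  intros j t th Ht. unfold Hj. destruct (Z.abs_nat j) eqn:En.
  - assert (j = 0%Z) by lia. subst j. unfold Lr, Cexpi, Cscal. pose proof (sqn_ray t th) as E. unfold sqn in E.
    rewrite E. simpl IZR. rewrite Rmult_0_l, cos_0, sin_0. apply Cx_eq; simpl; ring.
  - rewrite Umode_ray, Vmode_ray, En by lra. unfold Cscal, Cadd. apply Cx_eq; simpl; ring.
Qed.

Lemma harmC_Hj : forall j, harmonicC Rid Rd (Hj j).
Proof.
  intro j. unfold Hj. destruct (Z.abs_nat j) as [|m].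
  - split.
    + apply (harm_ext _ _ (fun a b => (-2 * Rd) * Lr a b + (2 * Rd * ln Rid) * (fun _ _ => 1) a b)).
      * intros; unfold re_f; simpl; ring.
      * apply harm_lin; [apply harm_Lr; lra|apply harm_const].
    + apply (harm_ext _ _ (fun _ _ => 0)); [intros; unfold im_f; reflexivity|apply harm_const].
  - apply (harmC_ext _ _ (fun a b => Cadd (Cmul (cH (S m), 0) (Umode j a b)) (Cmul (- cH (S m) * (Rid ^ S m) ^ 2, 0) (Vmode j a b)))).
    + intros. rewrite !cscal_cmul. reflexivity.
    + apply harmC_lin; [apply harmC_Umode|apply harmC_Vmode; lra].
Qed.

Lemma trace_Hj_Rid : forall j th, trace Rid (Hj j) th = C0.
Proof.
  intros j th. unfold trace. rewrite Hj_ray by lra.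
  destruct (Z.abs_nat j) as [|m].
  - rewrite ln_pow by lra. unfold Cscal, C0. apply Cx_eq; simpl; field.
  - rewrite pow_inv. assert (Rid ^ S m <> 0) by (apply pow_nonzero; lra).
    unfold Cscal, C0. apply Cx_eq; simpl fst; simpl snd; field; auto. all: split; [apply pow_nonzero|]; lra.
Qed.

Lemma d_Hj0 : forall t, 0 < t -> derivable_pt_lim (fun s => -2 * Rd * (ln (s ^ 2) / 2 - ln Rid)) t (-2 * Rd / t).
Proof.
  intros t Ht. eapply dpl_val.
  - apply dpl_scal. apply dpl_minus; [|apply derivable_pt_lim_const]. unfold Rdiv.
    apply (dpl_mult (fun s => ln (s ^ 2)) (fun _ => / 2)); [|apply derivable_pt_lim_const].
    apply (dpl_comp (fun s => s ^ 2) ln); [apply derivable_pt_lim_pow|apply derivable_pt_lim_ln; apply pow_lt; lra].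
  - simpl. field. lra.
Qed.

Lemma d_HjS : forall m t, 0 < t -> derivable_pt_lim (fun s => cH (S m) * s ^ S m + (- cH (S m) * (Rid ^ S m) ^ 2) * (/ s) ^ S m) t
   (cH (S m) * (INR (S m) * t ^ m) + (- cH (S m) * (Rid ^ S m) ^ 2) * (INR (S m) * (/ t) ^ m * (- 1 / t ^ 2))).
Proof.
  intros m t Ht. apply dpl_plus; apply dpl_scal; [apply derivable_pt_lim_pow|apply d_invpow; lra].
Qed.

Lemma dn_outer_Hj : forall j th, dn_outerC Rd (Hj j) th (Cscal (-2 * gam (Z.abs_nat j)) (Cexpi j th)).
Proof.
  intros j th. pose proof (Hj_ray j) as Hr. destruct (Z.abs_nat j) as [|m].
  - apply (dn_outerC_ray Rd (Hj j) th (fun s => -2 * Rd * (ln (s ^ 2) / 2 - ln Rid))); [lra|exact (fun t Ht => Hr t th Ht)|].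
    eapply dpl_val; [apply d_Hj0; lra|]. unfold gam, Den. simpl. field. lra.
  - apply (dn_outerC_ray Rd (Hj j) th (fun s => cH (S m) * s ^ S m + (- cH (S m) * (Rid ^ S m) ^ 2) * (/ s) ^ S m));
      [lra|exact (fun t Ht => Hr t th Ht)|].
    eapply dpl_val; [apply d_HjS; lra|].
    unfold cH, gam, Den. rewrite pow_inv. simpl pow.
    assert (Rd ^ m <> 0) by (apply pow_nonzero; lra).
    assert (Rid ^ m <> 0) by (apply pow_nonzero; lra).
    assert (0 < (Rid * Rid ^ m) ^ 2 + (Rd * Rd ^ m) ^ 2).
    { assert (0 < (Rd * Rd ^ m) ^ 2) by (apply pow_lt; apply Rmult_lt_0_compat; [lra|apply pow_lt; lra]).
      pose proof (pow2_ge_0 (Rid * Rid ^ m)). lra. }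
    assert (INR (S m) <> 0) by (apply not_0_INR; lia).
    simpl pow in *. field. repeat split; try lra; auto.
Qed.

Lemma Cj_0 : Cj Rid Rd 0 = 2 * Rd / Rid.
Proof. unfold Cj. simpl. field. lra. Qed.

Lemma Cj_S : forall j m, Z.abs_nat j = S m ->
  Cj Rid Rd j = 8 * (Rd * Rd ^ m) ^ 2 * Rd * ((Rid ^ m) ^ 2 * Rid) / ((Rid * Rid ^ m) ^ 2 + (Rd * Rd ^ m) ^ 2) ^ 2.
Proof.
  intros j m E. unfold Cj. rewrite <- Zabs2Nat.id_abs, E.
  replace (2 * Z.of_nat (S m) + 1)%Z with (Z.of_nat (m + m + 3)) by lia.
  replace (2 * Z.of_nat (S m) - 1)%Z with (Z.of_nat (m + m + 1)) by lia.
  replace (2 * Z.of_nat (S m))%Z with (Z.of_nat (m + m + 2)) by lia.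
  rewrite <- !pow_powerRZ. rewrite !pow_add. unfold Rdiv. f_equal; [simpl; ring|f_equal; simpl; ring].
Qed.

Lemma dn_inner_Hj : forall j th, dn_innerC Rid (Hj j) th (Cscal (Cj Rid Rd j) (Cexpi j th)).
Proof.
  intros j th. pose proof (Hj_ray j) as Hr. pose proof (Cj_S j) as HC. destruct (Z.abs_nat j) as [|m] eqn:En.
  - assert (j = 0%Z) by lia. subst j.
    apply (dn_innerC_ext Rid (Hj 0) _ th (Cscal (- (-2 * Rd / Rid)) (Cexpi 0 th))); [reflexivity| |].
    { rewrite Cj_0. f_equal. field. lra. }
    apply (dn_innerC_ray Rid (Hj 0) th (fun s => -2 * Rd * (ln (s ^ 2) / 2 - ln Rid))); [lra|exact (fun t Ht => Hr t th Ht)|].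
    apply d_Hj0; lra.
  - apply (dn_innerC_ext Rid (Hj j) _ th (Cscal (- (cH (S m) * (INR (S m) * Rid ^ m) + (- cH (S m) * (Rid ^ S m) ^ 2) * (INR (S m) * (/ Rid) ^ m * (- 1 / Rid ^ 2)))) (Cexpi j th))); [reflexivity| |].
    { rewrite (HC m eq_refl). f_equal.
      unfold cH, gam, Den. rewrite pow_inv. simpl pow.
      assert (Rd ^ m <> 0) by (apply pow_nonzero; lra).
      assert (Rid ^ m <> 0) by (apply pow_nonzero; lra).
      assert (0 < (Rid * Rid ^ m) ^ 2 + (Rd * Rd ^ m) ^ 2).
      { assert (0 < (Rd * Rd ^ m) ^ 2) by (apply pow_lt; apply Rmult_lt_0_compat; [lra|apply pow_lt; lra]).
        pose proof (pow2_ge_0 (Rid * Rid ^ m)). lra. }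
      assert (INR (S m) <> 0) by (apply not_0_INR; lia).
      simpl pow in *. field. repeat split; try lra; auto. }
    apply (dn_innerC_ray Rid (Hj j) th (fun s => cH (S m) * s ^ S m + (- cH (S m) * (Rid ^ S m) ^ 2) * (/ s) ^ S m));
      [lra|exact (fun t Ht => Hr t th Ht)|].
    apply d_HjS; lra.
Qed.

Lemma Cj_pos : forall j, 0 < Cj Rid Rd j.
Proof.
  intro j. unfold Cj. apply Rdiv_lt_0_compat.
  - apply Rmult_lt_0_compat; [apply Rmult_lt_0_compat; [lra|]|]; apply powerRZ_lt; lra.
  - apply pow_lt. pose proof (powerRZ_lt Rid (2 * Z.abs j) ltac:(lra)). pose proof (powerRZ_lt Rd (2 * Z.abs j) ltac:(lra)). lra.
Qed.
End Modes.

(** * Superposition over finite Fourier sums *)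

(* Identities between complex expressions, checked componentwise by [ring]. *)
Ltac cxr := apply Cx_eq; unfold Cadd, Csub, Cmul, Cscal, C0, Cconj; simpl; ring.

Lemma csum_ext : forall n f g, (forall k, (k <= n)%nat -> f k = g k) -> csum n f = csum n g.
Proof. induction n; intros f g E; simpl.
  - apply E; lia.
  - rewrite (IHn f g). rewrite (E (S n)); auto. intros; apply E; lia. Qed.

Lemma csum_lin : forall n f g c d,
  csum n (fun k => Cadd (Cmul c (f k)) (Cmul d (g k))) = Cadd (Cmul c (csum n f)) (Cmul d (csum n g)).
Proof. induction n; intros; simpl; auto. rewrite IHn. cxr. Qed.

Lemma harmC_csum : forall Rid Rd n (F : nat -> R -> R -> Cx), (forall k, harmonicC Rid Rd (F k)) ->
  harmonicC Rid Rd (fun x y => csum n (fun k => F k x y)).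
Proof.
  induction n; intros F HF; simpl; auto.
  apply (harmC_ext _ _ (fun x y => Cadd (Cmul (1,0) (csum n (fun k => F k x y))) (Cmul (1,0) (F (S n) x y)))).
  - intros; cxr.
  - apply harmC_lin; auto.
Qed.

Lemma dn_outerC_csum : forall Rd n (F : nat -> R -> R -> Cx) th l,
  (forall k, dn_outerC Rd (F k) th (l k)) ->
  dn_outerC Rd (fun x y => csum n (fun k => F k x y)) th (csum n l).
Proof.
  induction n; intros F th l HF; simpl; auto.
  apply (dn_outerC_ext Rd (fun x y => Cadd (Cmul (1,0) (csum n (fun k => F k x y))) (Cmul (1,0) (F (S n) x y))) _ th
    (Cadd (Cmul (1,0) (csum n l)) (Cmul (1,0) (l (S n))))); [intros; cxr|cxr|].
  apply dn_outerC_lin; auto.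
Qed.

Lemma dn_innerC_csum : forall Rid n (F : nat -> R -> R -> Cx) th l,
  (forall k, dn_innerC Rid (F k) th (l k)) ->
  dn_innerC Rid (fun x y => csum n (fun k => F k x y)) th (csum n l).
Proof.
  induction n; intros F th l HF; simpl; auto.
  apply (dn_innerC_ext Rid (fun x y => Cadd (Cmul (1,0) (csum n (fun k => F k x y))) (Cmul (1,0) (F (S n) x y))) _ th
    (Cadd (Cmul (1,0) (csum n l)) (Cmul (1,0) (l (S n))))); [intros; cxr|cxr|].
  apply dn_innerC_lin; auto.
Qed.

Definition fsum (M N : nat) (F : Z -> Cx) : Cx :=
  csum (2 * N) (fun k => let j := (Z.of_nat k - Z.of_nat N)%Z in
    if Z.leb (Z.of_nat M) (Z.abs j) then F j else C0).

Lemma fourier_sum_fsum : forall M N a th,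
  fourier_sum M N a th = fsum M N (fun j => Cmul (a j) (Cexpi j th)).
Proof. reflexivity. Qed.

Lemma fsum_ext : forall M N F G,
  (forall j, (Z.of_nat M <= Z.abs j <= Z.of_nat N)%Z -> F j = G j) -> fsum M N F = fsum M N G.
Proof.
  intros M N F G E. apply csum_ext. intros k Hk. cbv zeta.
  destruct (Z.leb_spec (Z.of_nat M) (Z.abs (Z.of_nat k - Z.of_nat N))); [|reflexivity].
  apply E. lia.
Qed.

Lemma fsum_zero : forall M N, fsum M N (fun _ => C0) = C0.
Proof.
  intros M N. unfold fsum. induction (2 * N)%nat as [|n IH]; simpl.
  - destruct (Z.leb _ _); reflexivity.
  - rewrite IH. destruct (Z.leb _ _); cxr.
Qed.

Lemma fsum_lin : forall M N F G c d,
  fsum M N (fun j => Cadd (Cmul c (F j)) (Cmul d (G j))) = Cadd (Cmul c (fsum M N F)) (Cmul d (fsum M N G)).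
Proof.
  intros. unfold fsum. rewrite <- csum_lin. apply csum_ext. intros k _. cbv zeta.
  destruct (Z.leb _ _); [reflexivity|cxr].
Qed.

Lemma harmC_fsum : forall Rid Rd M N (U : Z -> R -> R -> Cx), (forall j, harmonicC Rid Rd (U j)) ->
  harmonicC Rid Rd (fun x y => fsum M N (fun j => U j x y)).
Proof.
  intros Rid Rd M N U HU.
  apply (harmC_csum Rid Rd (2 * N) (fun k x y => let j := (Z.of_nat k - Z.of_nat N)%Z in
    if Z.leb (Z.of_nat M) (Z.abs j) then U j x y else C0)).
  intro k. cbv zeta. destruct (Z.leb _ _); [apply HU|apply harmC_const].
Qed.

Lemma dn_outerC_fsum : forall Rd M N (U : Z -> R -> R -> Cx) th L,
  (forall j, dn_outerC Rd (U j) th (L j)) ->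
  dn_outerC Rd (fun x y => fsum M N (fun j => U j x y)) th (fsum M N L).
Proof.
  intros Rd M N U th L HU.
  apply (dn_outerC_csum Rd (2 * N) (fun k x y => let j := (Z.of_nat k - Z.of_nat N)%Z in
    if Z.leb (Z.of_nat M) (Z.abs j) then U j x y else C0)).
  intro k. cbv zeta. destruct (Z.leb _ _); [apply HU|apply dn_outerC_const].
Qed.

Lemma dn_innerC_fsum : forall Rid M N (U : Z -> R -> R -> Cx) th L,
  (forall j, dn_innerC Rid (U j) th (L j)) ->
  dn_innerC Rid (fun x y => fsum M N (fun j => U j x y)) th (fsum M N L).
Proof.
  intros Rid M N U th L HU.
  apply (dn_innerC_csum Rid (2 * N) (fun k x y => let j := (Z.of_nat k - Z.of_nat N)%Z in
    if Z.leb (Z.of_nat M) (Z.abs j) then U j x y else C0)).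
  intro k. cbv zeta. destruct (Z.leb _ _); [apply HU|apply dn_innerC_const].
Qed.

Lemma limit1_in_local : forall f g (D : R -> Prop) l eta, 0 < eta ->
  (forall h, D h -> Rabs h < eta -> f h = g h) -> limit1_in f D l 0 -> limit1_in g D l 0.
Proof.
  intros f g D l eta He E H eps Heps. destruct (H eps Heps) as [a [Ha Hh]].
  exists (Rmin a eta); split; [apply Rmin_pos; lra|].
  intros h [HD Hd]. change (Rabs (h - 0) < Rmin a eta) in Hd. rewrite Rminus_0_r in Hd.
  assert (Rmin a eta <= a) by apply Rmin_l. assert (Rmin a eta <= eta) by apply Rmin_r.
  rewrite <- E by (auto; lra). apply Hh. split; auto. change (Rabs (h - 0) < a). rewrite Rminus_0_r. lra.
Qed.

Lemma dn_innerC_congr : forall Rid Rd F G th l, 0 < Rid < Rd ->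
  (forall x y, in_closure Rid Rd x y -> F x y = G x y) -> dn_innerC Rid F th l -> dn_innerC Rid G th l.
Proof.
  intros Rid Rd F G th l HR E [H1 H2].
  assert (Hc : forall h, 0 < h -> Rabs h < Rd - Rid -> forall t, t = Rid + h \/ t = Rid ->
      F (t * cos th) (t * sin th) = G (t * cos th) (t * sin th)).
  { intros h Hh Ha t Ht. apply E. unfold in_closure. pose proof (sqn_ray t th) as S. unfold sqn in S. rewrite S.
    apply Rabs_def2 in Ha. split; apply pow_incr; lra. }
  split; unfold dn_inner in *; [eapply (limit1_in_local _ _ _ _ (Rd - Rid)); [|intros h Hh Ha|exact H1]|eapply (limit1_in_local _ _ _ _ (Rd - Rid)); [|intros h Hh Ha|exact H2]].
  - lra.
  - unfold ray, re_f. rewrite (Hc h Hh Ha (Rid + h)), (Hc h Hh Ha Rid); auto.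
  - lra.
  - unfold ray, im_f. rewrite (Hc h Hh Ha (Rid + h)), (Hc h Hh Ha Rid); auto.
Qed.

Lemma dn_inner_unique : forall Rid u th l l', dn_inner Rid u th l -> dn_inner Rid u th l' -> l = l'.
Proof.
  intros Rid u th l l' H1 H2. eapply single_limit; [|exact H1|exact H2].
  intros al Hal. exists (al / 2). split; [lra|]. change (Rabs (al / 2 - 0) < al). rewrite Rminus_0_r, Rabs_pos_eq; lra.
Qed.

Lemma dn_innerC_unique : forall Rid U th l l', dn_innerC Rid U th l -> dn_innerC Rid U th l' -> l = l'.
Proof. intros Rid U th l l' [A1 A2] [B1 B2]. apply Cx_eq; eapply dn_inner_unique; eauto. Qed.

Lemma Cj_abs : forall Rid Rd j1 j2, Z.abs j1 = Z.abs j2 -> Cj Rid Rd j1 = Cj Rid Rd j2.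
Proof. intros. unfold Cj. rewrite H. reflexivity. Qed.

Lemma harmC_sub : forall Rid Rd U V, harmonicC Rid Rd U -> harmonicC Rid Rd V ->
  harmonicC Rid Rd (fun x y => Csub (U x y) (V x y)).
Proof.
  intros. apply (harmC_ext _ _ (fun x y => Cadd (Cmul (1,0) (U x y)) (Cmul (-1,0) (V x y))));
    [intros; cxr|apply harmC_lin; auto].
Qed.

Lemma dn_outerC_sub : forall Rd U V th l1 l2, dn_outerC Rd U th l1 -> dn_outerC Rd V th l2 ->
  dn_outerC Rd (fun x y => Csub (U x y) (V x y)) th (Csub l1 l2).
Proof.
  intros. apply (dn_outerC_ext Rd (fun x y => Cadd (Cmul (1,0) (U x y)) (Cmul (-1,0) (V x y))) _ th
    (Cadd (Cmul (1,0) l1) (Cmul (-1,0) l2))); [intros; cxr|cxr|apply dn_outerC_lin; auto].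
Qed.

Lemma harmC_unique : forall Rid Rd U V (g : R -> Cx), 0 < Rid < Rd ->
  harmonicC Rid Rd U -> harmonicC Rid Rd V ->
  (forall th, trace Rid U th = trace Rid V th) ->
  (forall th, dn_outerC Rd U th (g th)) -> (forall th, dn_outerC Rd V th (g th)) ->
  forall x y, in_closure Rid Rd x y -> U x y = V x y.
Proof.
  intros Rid Rd U V g HR HU HV Htr HdU HdV x y Hxy.
  pose proof (harmC_zero Rid Rd (fun x y => Csub (U x y) (V x y)) HR (harmC_sub _ _ _ _ HU HV))
    as Hz.
  assert (E : Csub (U x y) (V x y) = C0).
  { apply Hz; auto.
    - intro th. specialize (Htr th). unfold trace in *. rewrite Htr. cxr.
    - intro th. apply (dn_outerC_ext Rd (fun x y => Csub (U x y) (V x y)) _ th (Csub (g th) (g th)));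
        [reflexivity|cxr|]. apply dn_outerC_sub; auto. }
  unfold Csub, C0 in E. injection E as E1 E2. apply Cx_eq; lra.
Qed.

Lemma harmC_cmul : forall Rid Rd c U, harmonicC Rid Rd U ->
  harmonicC Rid Rd (fun x y => Cmul c (U x y)).
Proof.
  intros. apply (harmC_ext _ _ (fun x y => Cadd (Cmul c (U x y)) (Cmul (0,0) (U x y))));
    [intros; cxr|apply harmC_lin; auto].
Qed.

Lemma dn_outerC_cmul : forall Rd c U th l, dn_outerC Rd U th l ->
  dn_outerC Rd (fun x y => Cmul c (U x y)) th (Cmul c l).
Proof.
  intros. apply (dn_outerC_ext Rd (fun x y => Cadd (Cmul c (U x y)) (Cmul (0,0) (U x y))) _ th
    (Cadd (Cmul c l) (Cmul (0,0) l))); [intros; cxr|cxr|apply dn_outerC_lin; auto].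
Qed.

Lemma dn_innerC_cmul : forall Rid c U th l, dn_innerC Rid U th l ->
  dn_innerC Rid (fun x y => Cmul c (U x y)) th (Cmul c l).
Proof.
  intros. apply (dn_innerC_ext Rid (fun x y => Cadd (Cmul c (U x y)) (Cmul (0,0) (U x y))) _ th
    (Cadd (Cmul c l) (Cmul (0,0) l))); [intros; cxr|cxr|apply dn_innerC_lin; auto].
Qed.

(** * One step of the iteration *)

Section OneStep.
Variables (Rid Rd : R) (ubar qbar omstar : R -> Cx) (vstar : R -> R -> Cx).
Hypotheses (HR : 0 < Rid < Rd) (Hstar : primary_sol Rid Rd qbar omstar vstar)
  (Hexact : forall th, trace Rd vstar th = ubar th).
(* The current error μ = Σ_{M ≤ |j| ≤ N} c_j e^{ijθ}. *)
Variables (M N : nat) (c : Z -> Cx).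

Let Wsum (x y : R) : Cx := fsum M N (fun j => Cmul (c j) (Wj Rid Rd j x y)).
Let Hsum (x y : R) : Cx := fsum M N (fun j => Cmul (c j) (Hj Rid Rd j x y)).

Lemma trace_Wsum_Rid : forall th, trace Rid Wsum th = fourier_sum M N c th.
Proof.
  intro th. rewrite fourier_sum_fsum. apply fsum_ext. intros j _.
  pose proof (trace_Wj_Rid Rid Rd HR j th) as T. unfold trace in T. rewrite T. reflexivity.
Qed.

Lemma trace_Wsum_Rd : forall th,
  trace Rd Wsum th = fsum M N (fun j => Cmul (c j) (Cscal (gam Rid Rd (Z.abs_nat j)) (Cexpi j th))).
Proof.
  intro th. apply fsum_ext. intros j _.
  pose proof (trace_Wj_Rd Rid Rd HR j th) as T. unfold trace in T. rewrite T. reflexivity.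
Qed.

Lemma trace_Hsum_Rid : forall th, trace Rid Hsum th = C0.
Proof.
  intro th. rewrite <- (fsum_zero M N). apply fsum_ext. intros j _.
  pose proof (trace_Hj_Rid Rid Rd HR j th) as T. unfold trace in T. rewrite T. cxr.
Qed.

(* The state v = v* - Σ c_j W_j: same Dirichlet data ω* - μ = ω on Γ_id and
   same Neumann data q̄ on Γ_d as the primary solution. *)
Lemma primary_repr : forall om v, primary_sol Rid Rd qbar om v ->
  (forall th, Csub (omstar th) (om th) = fourier_sum M N c th) ->
  forall x y, in_closure Rid Rd x y -> v x y = Csub (vstar x y) (Wsum x y).
Proof.
  intros om v [Hv [Hvq Hvt]] Hmu. destruct Hstar as [Hs [Hsq Hst]].
  apply (harmC_unique Rid Rd v (fun x y => Csub (vstar x y) (Wsum x y)) qbar HR Hv); auto.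
  - apply harmC_sub; auto. apply harmC_fsum. intro j. apply harmC_cmul, harmC_Wj; auto.
  - intro th. rewrite Hvt. pose proof (trace_Wsum_Rid th) as T. unfold trace in *.
    rewrite Hst, T, <- Hmu. cxr.
  - intro th. apply (dn_outerC_ext Rd (fun x y => Csub (vstar x y) (Wsum x y)) _ th
      (Csub (qbar th) (fsum M N (fun j => Cmul (c j) C0)))); [reflexivity| |].
    + rewrite (fsum_ext M N _ (fun _ => C0)), fsum_zero; [cxr|intros; cxr].
    + apply dn_outerC_sub; auto. apply dn_outerC_fsum. intro j. apply dn_outerC_cmul, dn_Wj; auto.
Qed.

(* The adjoint state is v̂ = Σ c_j H_j: its Neumann datum 2(v - ū) on Γ_d
   equals -2 Σ c_j γ_j e^{ijθ}. *)
Lemma adjoint_repr : forall om v vh, primary_sol Rid Rd qbar om v ->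
  (forall th, Csub (omstar th) (om th) = fourier_sum M N c th) ->
  adjoint_sol Rid Rd ubar v vh ->
  forall x y, in_closure Rid Rd x y -> vh x y = Hsum x y.
Proof.
  intros om v vh Hv Hmu [Hh [Hhq Hht]].
  apply (harmC_unique Rid Rd vh Hsum (fun th => Cscal 2 (Csub (trace Rd v th) (ubar th))) HR Hh);
    auto.
  - apply harmC_fsum. intro j. apply harmC_cmul, harmC_Hj; auto.
  - intro th. rewrite Hht, trace_Hsum_Rid. reflexivity.
  - intro th.
    assert (Ev : trace Rd v th = Csub (ubar th) (trace Rd Wsum th)).
    { unfold trace. rewrite (primary_repr om v Hv Hmu).
      - rewrite <- Hexact. reflexivity.
      - unfold in_closure. pose proof (sqn_ray Rd th) as S. unfold sqn in S. rewrite S.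
        split; [apply pow_incr|]; lra. }
    apply (dn_outerC_ext Rd Hsum _ th
      (fsum M N (fun j => Cmul (c j) (Cscal (-2 * gam Rid Rd (Z.abs_nat j)) (Cexpi j th)))));
      [reflexivity| |].
    + rewrite Ev, trace_Wsum_Rd.
      set (T := fsum M N (fun j => Cmul (c j) (Cscal (gam Rid Rd (Z.abs_nat j)) (Cexpi j th)))).
      transitivity (Cadd (Cmul (-2,0) T) (Cmul (0,0) T)); [|cxr].
      unfold T. rewrite <- fsum_lin. apply fsum_ext. intros; cxr.
    + apply dn_outerC_fsum. intro j. apply dn_outerC_cmul, dn_outer_Hj; auto.
Qed.

(* Hence J'(ω) = -∂v̂/∂n on Γ_id is -Σ c_j C_j e^{ijθ}. *)
Lemma gradient_repr : forall om v vh (Jp : R -> Cx), primary_sol Rid Rd qbar om v ->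
  (forall th, Csub (omstar th) (om th) = fourier_sum M N c th) ->
  adjoint_sol Rid Rd ubar v vh ->
  (forall th, dn_innerC Rid vh th (Cscal (-1) (Jp th))) ->
  forall th, Jp th = Cscal (-1) (fsum M N (fun j => Cmul (c j) (Cscal (Cj Rid Rd j) (Cexpi j th)))).
Proof.
  intros om v vh Jp Hv Hmu Hh HJp th.
  assert (D : dn_innerC Rid vh th (fsum M N (fun j => Cmul (c j) (Cscal (Cj Rid Rd j) (Cexpi j th))))).
  { apply (dn_innerC_congr Rid Rd Hsum); auto.
    - intros x y Hxy. symmetry. apply (adjoint_repr om v vh); auto.
    - apply dn_innerC_fsum. intro j. apply dn_innerC_cmul, dn_inner_Hj; auto. }
  rewrite <- (dn_innerC_unique _ _ _ _ _ (HJp th) D). cxr.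
Qed.

Lemma error_step : forall om v vh (Jp : R -> Cx) rho (om' : R -> Cx),
  primary_sol Rid Rd qbar om v ->
  (forall th, Csub (omstar th) (om th) = fourier_sum M N c th) ->
  adjoint_sol Rid Rd ubar v vh ->
  (forall th, dn_innerC Rid vh th (Cscal (-1) (Jp th))) ->
  (forall th, om' th = Csub (om th) (Cscal rho (Jp th))) ->
  forall th, Csub (omstar th) (om' th) =
    fourier_sum M N (fun j => Cscal (1 - rho * Cj Rid Rd j) (c j)) th.
Proof.
  intros om v vh Jp rho om' Hv Hmu Hh HJp Hom' th.
  rewrite Hom', (gradient_repr om v vh Jp Hv Hmu Hh HJp th).
  set (S := fsum M N (fun j => Cmul (c j) (Cscal (Cj Rid Rd j) (Cexpi j th)))).
  transitivity (Cadd (Cmul (1,0) (Csub (omstar th) (om th))) (Cmul (- rho, 0) S)); [cxr|].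
  rewrite Hmu, !fourier_sum_fsum. unfold S. rewrite <- fsum_lin.
  apply fsum_ext. intros; cxr.
Qed.

End OneStep.

(** * Finite-step convergence *)

Fixpoint damping (rho : nat -> R) (C : R) (k : nat) : R :=
  match k with O => 1 | S k' => (1 - rho k' * C) * damping rho C k' end.

Lemma damping_zero : forall rho C i0, 1 - rho i0 * C = 0 ->
  forall k, (i0 < k)%nat -> damping rho C k = 0.
Proof.
  intros rho C i0 H0 k. induction k as [|k IH]; intro Hk; [lia|].
  simpl. destruct (Nat.eq_dec k i0) as [->|Hne].
  - rewrite H0. ring.
  - rewrite IH by lia. ring.
Qed.

Lemma error_after_steps
  (Rid Rd : R) (HR : 0 < Rid < Rd) (ubar qbar omstar : R -> Cx) (vstar : R -> R -> Cx)
  (Hstar : primary_sol Rid Rd qbar omstar vstar)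
  (Hexact : forall th, trace Rd vstar th = ubar th)
  (om : nat -> R -> Cx) (v vh : nat -> R -> R -> Cx) (Jp : nat -> R -> Cx) (rho : nat -> R)
  (Hv : forall k, primary_sol Rid Rd qbar (om k) (v k))
  (Hvh : forall k, adjoint_sol Rid Rd ubar (v k) (vh k))
  (HJp : forall k th, dn_innerC Rid (vh k) th (Cscal (-1) (Jp k th)))
  (Hiter : forall k th, om (S k) th = Csub (om k th) (Cscal (rho k) (Jp k th)))
  (M N : nat) (a : Z -> Cx)
  (Hmu0 : forall th, Csub (omstar th) (om O th) = fourier_sum M N a th) :
  forall k th, Csub (omstar th) (om k th) =
    fourier_sum M N (fun j => Cscal (damping rho (Cj Rid Rd j) k) (a j)) th.
Proof.
  induction k as [|k IH]; intro th.
  - rewrite Hmu0, !fourier_sum_fsum. apply fsum_ext. intros; simpl; cxr.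
  - rewrite (error_step Rid Rd ubar qbar omstar vstar HR Hstar Hexact M N _
               (om k) (v k) (vh k) (Jp k) (rho k) (om (S k)) (Hv k) IH (Hvh k) (HJp k) (Hiter k)).
    rewrite !fourier_sum_fsum. apply fsum_ext. intros; simpl; cxr.
Qed.

Theorem theorem2
  (Rid Rd : R) (HR : 0 < Rid < Rd)
  (ubar qbar : R -> Cx)
  (omstar : R -> Cx) (vstar : R -> R -> Cx)
  (Hstar : primary_sol Rid Rd qbar omstar vstar)
  (Hexact : forall th, trace Rd vstar th = ubar th)
  (om : nat -> R -> Cx) (v vh : nat -> R -> R -> Cx) (Jp : nat -> R -> Cx)
  (rho : nat -> R) (Hrho : forall k, 0 < rho k)
  (Hv : forall k, primary_sol Rid Rd qbar (om k) (v k))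
  (Hvh : forall k, adjoint_sol Rid Rd ubar (v k) (vh k))
  (HJp : forall k th, dn_innerC Rid (vh k) th (Cscal (-1) (Jp k th)))
  (Hiter : forall k th, om (S k) th = Csub (om k th) (Cscal (rho k) (Jp k th)))
  (M N : nat) (HMN : (M <= N)%nat) (a : Z -> Cx)
  (Hmu0 : forall th, Csub (omstar th) (om O th) = fourier_sum M N a th)
  (Hstep :
     (forall k, (k <= N - M)%nat -> rho k = 1 / Cj Rid Rd (Z.of_nat M + Z.of_nat k)) \/
     (forall k, (k <= N - M)%nat -> rho k = 1 / Cj Rid Rd (Z.of_nat N - Z.of_nat k))) :
  forall th, Csub (omstar th) (om (N - M + 1)%nat th) = C0.
Proof.
  intro th.
  rewrite (error_after_steps Rid Rd HR ubar qbar omstar vstar Hstar Hexact om v vh Jp rho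
             Hv Hvh HJp Hiter M N a Hmu0), fourier_sum_fsum, <- (fsum_zero M N).
  apply fsum_ext. intros j Hj.
  (* Mode j is annihilated at step |j| - M (resp. N - |j|), where ρ C_j = 1. *)
  assert (Hkill : damping rho (Cj Rid Rd j) (N - M + 1) = 0).
  { pose proof (Cj_pos Rid Rd HR j) as HC.
    destruct Hstep as [Hs|Hs];
      [apply (damping_zero _ _ (Z.abs_nat j - M))|apply (damping_zero _ _ (N - Z.abs_nat j))];
      try lia; rewrite Hs by lia; rewrite (Cj_abs Rid Rd _ j) by lia; field; lra. }
  rewrite Hkill. cxr.
Qed.
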